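(* Let $0<\epsilon<1$, $r>0$ be constants, $p_2=\frac{1-\epsilon}{n}$, $p_3=\frac{r}{n\ln n}$, and $K_0=\max\{1,\lambda_1^{-1}(10)\}=\max\{1,\tfrac{2(9+\epsilon)}{r}\}$. Then with probability tending to $1$ as $n\to\infty$, there is no vertex $v$ of $\mathbb{G}(n,p_2,p_3)$ whose propagation component satisfies $K_0\ln n\le |C_v|\le n-1$.
   Context: $\mathbb{G}(n,p_2,p_3)$ is the random hypergraph on a vertex set $V$ with $|V|=n$ in which each of the $\binom n2$ possible 2-element edges is present with probability $p_2$ and each of the $\binom n3$ possible 3-element hyperedges is present with probability $p_3$, all independently. Propagation process from a vertex $v$: one maintains a set $\mathcal{Y}_t$ of active vertices and a set $\mathcal{D}_t$ of inactive vertices, with $\mathcal{Y}_0=\{v\}$, $\mathcal{D}_0=\emptyset$; vertices in neither set are unexplored. At time $t=0,1,2,\dots$, while $\mathcal{Y}_t\neq\emptyset$, pick an active vertex $v_t\in\mathcal{Y}_t$ and let $U_t$ be the set of unexplored vertices $u$ such that $\{v_t,u\}$ is a 2-edge or $\{v_t,u,w\}$ is a 3-edge for some $w\in\mathcal{D}_t$; set $\mathcal{Y}_{t+1}=(\mathcal{Y}_t\cup U_t)\setminus\{v_t\}$ and $\mathcal{D}_{t+1}=\mathcal{D}_t\cup\{v_t\}$. The process stops at $T_v=\min\{t:\mathcal{Y}_t=\emptyset\}$, and the propagation component of $v$ is $C_v=\mathcal{D}_{T_v}$, so $|C_v|=T_v$. Here $\lambda_1(x)=1-\epsilon+\frac r2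 x$. *)

From Stdlib Require Import Reals Lra Lia List Permutation ClassicalEpsilon.
Import ListNotations.
Open Scope R_scope.

(* Vertex set V = {0, ..., n-1}. *)

(* All 2-element subsets {i,j} of V, encoded as (i,j) with i < j. *)
Definition pairs (n : nat) : list (nat * nat) :=
  flat_map (fun j => map (fun i => (i, j)) (seq 0 j)) (seq 0 n).

(* All 3-element subsets {i,j,k} of V, encoded as (i,j,k) with i < j < k. *)
Definition triples (n : nat) : list (nat * nat * nat) :=
  flat_map (fun k => flat_map (fun j => map (fun i => (i, j, k)) (seq 0 j)) (seq 0 k))
           (seq 0 n).

(* A hypergraph outcome is (b2, b3): b2 has one bit per element of [pairs n]
   (edge present or not), b3 one bit per element of [triples n]. *)

Definition edge2 (n : nat) (b2 : list bool) (x y : nat) : Prop :=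
  exists k i j, nth_error (pairs n) k = Some (i, j) /\ nth_error b2 k = Some true /\
    ((x = i /\ y = j) \/ (x = j /\ y = i)).

Definition edge3 (n : nat) (b3 : list bool) (x y z : nat) : Prop :=
  exists k i j l, nth_error (triples n) k = Some (i, j, l) /\ nth_error b3 k = Some true /\
    Permutation [x; y; z] [i; j; l].

Fixpoint expect (p : R) (m : nat) (f : list bool -> R) : R :=
  match m with
  | O => f nil
  | S m' => p * expect p m' (fun l => f (true :: l))
            + (1 - p) * expect p m' (fun l => f (false :: l))
  end.

Definition indic (P : Prop) : R :=
  if excluded_middle_informative P then 1 else 0.

Definition prob_G (n : nat) (p2 p3 : R) (E : list bool -> list bool -> Prop) : R :=
  expect p2 (length (pairs n)) (fun b2 =>
    expect p3 (length (triples n)) (fun b3 => indic (E b2 b3))).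

Definition newly (n : nat) (b2 b3 : list bool) (Yt Dt : nat -> Prop) (w u : nat) : Prop :=
  (u < n)%nat /\ ~ Yt u /\ ~ Dt u /\
  (edge2 n b2 w u \/ exists x, Dt x /\ edge3 n b3 w u x).

(* (Y, D) is a run of the propagation process from v (active/inactive sets
   indexed by time), which stops at time T = T_v; then |C_v| = |D_T| = T. *)
Definition propagation_run (n : nat) (b2 b3 : list bool) (v : nat)
    (Y D : nat -> nat -> Prop) (T : nat) : Prop :=
  (v < n)%nat /\
  (forall u, Y O u <-> u = v) /\
  (forall u, ~ D O u) /\
  (forall t, (t < T)%nat -> exists w, Y t w /\
      (forall u, Y (S t) u <-> ((Y t u \/ newly n b2 b3 (Y t) (D t) w u) /\ u <> w)) /\
      (forall u, D (S t) u <-> (D t u \/ u = w))) /\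
  (forall u, ~ Y T u).

Definition lambda1 (eps r x : R) : R := 1 - eps + r / 2 * x.

(* K0 = max{1, lambda1^{-1}(10)} = max{1, 2(9+eps)/r}. *)
Definition K0 (eps r : R) : R := Rmax 1 (2 * (9 + eps) / r).

From Stdlib Require Import Reals Lra Lia List Permutation ClassicalEpsilon Factorial.
Import ListNotations.
Open Scope R_scope.

(* If the propagation from v stops at time T, its inactive set C has T vertices, no present
   2-edge leaves C, no present 3-edge has exactly two vertices in C, and C contains the T - 1
   present edges through which its vertices were discovered. These conditions concern disjoint
   sets of independent bits, so for a fixed k-set C they have probability at most
     (k^2 p2 / 2 + k^3 p3 / 6)^(k-1) / (k-1)! * exp (- p2 k (n - k) - p3 k (k - 1) (n - k) / 2),
   and at most exp (- p3 k (k - 1) (n - k) / 2) alone. A union bound over the binom(n, k) sets gives n^-2 for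
   every K0 ln n <= k < n: the first bound handles k = O(ln^2 n), the 3-edge factor beats
   binom(n, k) <= min(n^k, n^(n-k)) beyond. Summing over k, the failure probability is <= 1/n. *)

(** * Counting pairs and triples *)

Definition countb {A} (f : A -> bool) (l : list A) : nat := length (filter f l).

Lemma countb_app {A} (f : A -> bool) l1 l2 : countb f (l1 ++ l2) = (countb f l1 + countb f l2)%nat.
Proof. unfold countb. rewrite filter_app, length_app. reflexivity. Qed.

Lemma countb_nil {A} (f : A -> bool) : countb f [] = 0%nat.
Proof. reflexivity. Qed.

Lemma countb_cons {A} (f : A -> bool) x l : countb f (x :: l) = ((if f x then 1 else 0) + countb f l)%nat.
Proof. unfold countb; simpl. destruct (f x); reflexivity. Qed.

Lemma countb_map {A B} (f : B -> bool) (g : A -> B) l : countb f (map g l) = countb (fun x => f (g x)) l.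
Proof. unfold countb. rewrite <- (length_map g), <- filter_map_swap. reflexivity. Qed.

Lemma countb_ext_in {A} (f g : A -> bool) l : (forall x, In x l -> f x = g x) -> countb f l = countb g l.
Proof. intros H. unfold countb. rewrite (filter_ext_in f g); auto. Qed.

Lemma countb_zero {A} (f : A -> bool) l : (forall x, In x l -> f x = false) -> countb f l = 0%nat.
Proof. intros H. unfold countb. rewrite (filter_ext_in f (fun _ => false)); auto. rewrite filter_false. reflexivity. Qed.

Lemma countb_predC {A} (f : A -> bool) l : (countb f l + countb (fun x => negb (f x)) l)%nat = length l.
Proof. induction l as [|x l IH]; simpl; auto. rewrite !countb_cons. destruct (f x); simpl; lia. Qed.

Lemma countb_lower {A} (g : A -> bool) E I : NoDup E -> (forall q, In q E -> In q I /\ g q = true) ->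
  (length E <= countb g I)%nat.
Proof. intros HE H. apply NoDup_incl_length; auto. intros q Hq. apply filter_In, H, Hq. Qed.

Lemma pairs_S n : pairs (S n) = pairs n ++ map (fun i => (i, n)) (seq 0 n).
Proof. unfold pairs. rewrite seq_S, flat_map_app. simpl. rewrite app_nil_r. reflexivity. Qed.

Lemma triples_S n : triples (S n) = triples n ++ map (fun p => (fst p, snd p, n)) (pairs n).
Proof.
  unfold triples at 1. rewrite seq_S, flat_map_app. simpl. rewrite app_nil_r. f_equal.
  unfold pairs. induction (seq 0 n) as [|j l IH]; simpl; auto.
  rewrite map_app, IH, map_map. reflexivity.
Qed.

Lemma in_pairs n i j : In (i, j) (pairs n) <-> (i < j < n)%nat.
Proof.
  unfold pairs. rewrite in_flat_map. split.
  - intros [j' [Hj Hi]]. apply in_map_iff in Hi as [i' [E Hi]]. inversion E; subst.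
    apply in_seq in Hj. apply in_seq in Hi. lia.
  - intros H. exists j. rewrite in_seq, in_map_iff. split; [lia|]. exists i. rewrite in_seq. split; auto; lia.
Qed.

Lemma in_triples n i j l : In (i, j, l) (triples n) <-> (i < j < l /\ l < n)%nat.
Proof.
  unfold triples. rewrite in_flat_map. split.
  - intros [l' [Hl H]]. apply in_flat_map in H as [j' [Hj Hi]].
    apply in_map_iff in Hi as [i' [E Hi]]. inversion E; subst.
    apply in_seq in Hj. apply in_seq in Hi. apply in_seq in Hl. lia.
  - intros H. exists l. rewrite in_seq, in_flat_map. split; [lia|]. exists j.
    rewrite in_seq, in_map_iff. split; [lia|]. exists i. rewrite in_seq. split; auto; lia.
Qed.

Definition pair_crosses (f : nat -> bool) (p : nat * nat) := xorb (f (fst p)) (f (snd p)).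
Definition pair_inside (f : nat -> bool) (p : nat * nat) := andb (f (fst p)) (f (snd p)).
Definition triple_two_inside (f : nat -> bool) (t : nat * nat * nat) :=
  let '(i, j, l) := t in Nat.eqb (Nat.b2n (f i) + Nat.b2n (f j) + Nat.b2n (f l)) 2.
Definition triple_inside (f : nat -> bool) (t : nat * nat * nat) :=
  let '(i, j, l) := t in andb (andb (f i) (f j)) (f l).

Lemma pair_counts (f : nat -> bool) n :
  let c := countb f (seq 0 n) in let d := countb (fun x => negb (f x)) (seq 0 n) in
  countb (pair_crosses f) (pairs n) = (c * d)%nat /\
  (2 * countb (pair_inside f) (pairs n) + c = c * c)%nat.
Proof.
  intros c d; subst c d. induction n as [|m IH]; [unfold countb; simpl; lia|].
  destruct IH as [H1 H2].
  rewrite pairs_S, seq_S, Nat.add_0_l, !countb_app, !countb_map, !countb_cons, !countb_nil.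
  assert (Cr : countb (fun x => pair_crosses f (x, m)) (seq 0 m)
             = if f m then countb (fun x => negb (f x)) (seq 0 m) else countb f (seq 0 m)).
  { unfold pair_crosses; simpl. destruct (f m); apply countb_ext_in; intros x _; destruct (f x); reflexivity. }
  assert (In2 : countb (fun x => pair_inside f (x, m)) (seq 0 m) = if f m then countb f (seq 0 m) else 0%nat).
  { unfold pair_inside; simpl. destruct (f m).
    - apply countb_ext_in; intros x _; destruct (f x); reflexivity.
    - apply countb_zero; intros x _; destruct (f x); reflexivity. }
  rewrite Cr, In2. destruct (f m); simpl; nia.
Qed.

Lemma triple_counts (f : nat -> bool) n :
  let c := countb f (seq 0 n) in let d := countb (fun x => negb (f x)) (seq 0 n) in
  (2 * countb (triple_two_inside f) (triples n) + c * d = c * c * d)%nat /\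
  (6 * countb (triple_inside f) (triples n) + 3 * c * c = c * c * c + 2 * c)%nat.
Proof.
  intros c d; subst c d. induction n as [|m IH]; [unfold countb; simpl; lia|].
  destruct IH as [H1 H2]. destruct (pair_counts f m) as [P1 P2].
  assert (E2 : countb (fun p => triple_two_inside f (fst p, snd p, m)) (pairs m)
             = if f m then countb (pair_crosses f) (pairs m) else countb (pair_inside f) (pairs m)).
  { destruct (f m) eqn:Fm; apply countb_ext_in; intros [i j] _;
      unfold triple_two_inside, pair_crosses, pair_inside; simpl; rewrite Fm; destruct (f i), (f j); reflexivity. }
  assert (I3 : countb (fun p => triple_inside f (fst p, snd p, m)) (pairs m)
             = if f m then countb (pair_inside f) (pairs m) else 0%nat).
  { destruct (f m) eqn:Fm.
    - apply countb_ext_in; intros [i j] _; unfold triple_inside, pair_inside; simpl; rewrite Fm; destruct (f i), (f j); reflexivity.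
    - apply countb_zero; intros [i j] _; unfold triple_inside; simpl; rewrite Fm; destruct (f i), (f j); reflexivity. }
  rewrite triples_S, seq_S, Nat.add_0_l, !countb_app, !countb_map, E2, I3, !countb_cons, !countb_nil.
  destruct (f m); simpl; nia.
Qed.

(** * Positions, subsets and binomial coefficients *)

Definition positions {A} (f : A -> bool) (L : list A) : list nat :=
  filter (fun q => match nth_error L q with Some x => f x | None => false end) (seq 0 (length L)).

Lemma in_positions {A} (f : A -> bool) L q :
  In q (positions f L) <-> exists x, nth_error L q = Some x /\ f x = true.
Proof.
  unfold positions. rewrite filter_In, in_seq. split.
  - intros [_ H]. destruct (nth_error L q) eqn:E; [eauto|discriminate].
  - intros [x [E F]]. rewrite E. split; auto.
    assert (nth_error L q <> None) by congruence. apply nth_error_Some in H. lia.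
Qed.

Lemma positions_NoDup {A} (f : A -> bool) L : NoDup (positions f L).
Proof. apply NoDup_filter, seq_NoDup. Qed.

Lemma positions_lt {A} (f : A -> bool) L q : In q (positions f L) -> (q < length L)%nat.
Proof. intros H. apply in_positions in H as [x [E _]]. apply nth_error_Some. congruence. Qed.

Lemma length_positions {A} (f : A -> bool) L : length (positions f L) = countb f L.
Proof.
  unfold positions. induction L as [|x L IH]; simpl; auto.
  rewrite countb_cons, <- seq_shift.
  assert (Hm : forall (g : nat -> bool) l, filter g (map S l) = map S (filter (fun q => g (S q)) l)).
  { intros g l. induction l; simpl; auto. destruct (g (S a)); simpl; f_equal; auto. }
  rewrite Hm. simpl. destruct (f x); simpl; rewrite length_map, IH; auto.
Qed.

Lemma positions_disjoint {A} (f g : A -> bool) L : (forall x, f x = true -> g x = true -> False) ->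
  forall q, In q (positions f L) -> In q (positions g L) -> False.
Proof.
  intros H q H1 H2. apply in_positions in H1 as [x [E1 F1]]. apply in_positions in H2 as [y [E2 F2]].
  rewrite E1 in E2. inversion E2; subst. eauto.
Qed.

Fixpoint subsets (l : list nat) (k : nat) : list (list nat) :=
  match l, k with
  | _, O => [[]]
  | [], S _ => []
  | x :: l', S k' => map (cons x) (subsets l' k') ++ subsets l' k
  end.

Fixpoint binom (n k : nat) : nat :=
  match n, k with
  | _, O => 1%nat
  | O, S _ => 0%nat
  | S n', S k' => (binom n' k' + binom n' k)%nat
  end.

Lemma length_subsets l k : length (subsets l k) = binom (length l) k.
Proof.
  revert k; induction l as [|x l IH]; intros [|k]; simpl; auto.
  rewrite length_app, length_map, !IH. reflexivity.
Qed.

Lemma in_subsets l k s : In s (subsets l k) -> incl s l /\ length s = k /\ (NoDup l -> NoDup s).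
Proof.
  revert k s; induction l as [|x l IH]; intros [|k] s H; simpl in H.
  - destruct H as [<-|[]]. repeat split; try (intros a []); intros; constructor.
  - destruct H.
  - destruct H as [<-|[]]. repeat split; try (intros a []); intros; constructor.
  - apply in_app_or in H as [H|H].
    + apply in_map_iff in H as [s' [<- H]]. apply IH in H as [H1 [H2 H3]]. repeat split.
      * intros a [<-|Ha]; [left|right]; auto.
      * simpl; lia.
      * intros Hn. inversion Hn; subst. constructor; auto.
    + apply IH in H as [H1 [H2 H3]]. repeat split; auto.
      * intros a Ha; right; auto.
      * intros Hn; inversion Hn; auto.
Qed.

Definition memb (C : list nat) (x : nat) : bool := if in_dec Nat.eq_dec x C then true else false.

Lemma memb_true C x : memb C x = true <-> In x C.
Proof. unfold memb. destruct (in_dec _ _ _); split; auto; discriminate. Qed.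

Lemma countb_subsets l k C : NoDup l -> In C (subsets l k) -> countb (memb C) l = k.
Proof.
  intros Hl HC. destruct (in_subsets l k C HC) as [Hi [Hk Hn]]. specialize (Hn Hl).
  unfold countb. rewrite <- Hk. apply Nat.le_antisymm; apply NoDup_incl_length; auto.
  - apply NoDup_filter; auto.
  - intros x Hx. apply filter_In in Hx as [_ Hx]. apply memb_true; auto.
  - intros x Hx. apply filter_In. split; auto. apply memb_true; auto.
Qed.

Lemma subsets_of_countb (g : nat -> bool) I j : (j <= countb g I)%nat ->
  exists s, In s (subsets I j) /\ forall q, In q s -> g q = true.
Proof.
  revert j; induction I as [|x I IH]; intros [|j] H; simpl.
  - exists []. split; [left; auto|intros _ []].
  - unfold countb in H; simpl in H; lia.
  - exists []. split; [left; auto|intros _ []].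
  - rewrite countb_cons in H. destruct (g x) eqn:G.
    + destruct (IH j) as [s [H1 H2]]; [lia|]. exists (x :: s). split.
      * apply in_or_app; left; apply in_map; auto.
      * intros q [<-|Hq]; auto.
    + destruct (IH (S j)) as [s [H1 H2]]; [lia|]. exists s. split; auto. apply in_or_app; right; auto.
Qed.

Lemma filter_in_subsets (f : nat -> bool) l : In (filter f l) (subsets l (length (filter f l))).
Proof.
  induction l as [|x l IH]; simpl; auto.
  destruct (f x); simpl.
  - apply in_or_app; left; apply in_map; auto.
  - destruct (length (filter f l)) eqn:E; [|apply in_or_app; right; auto].
    destruct (filter f l); [left; auto|discriminate].
Qed.

Lemma pow_succ_bernoulli M j : (M ^ S j + S j * M ^ j <= (S M) ^ S j)%nat.
Proof.
  induction j; [simpl; lia|].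
  rewrite (Nat.pow_succ_r' M (S j)), (Nat.pow_succ_r' (S M) (S j)), (Nat.pow_succ_r' M j) in *.
  nia.
Qed.

Lemma binom_mul_fact_le M j : (binom M j * fact j <= M ^ j)%nat.
Proof.
  revert j; induction M as [|M IH]; intros [|j]; simpl; try lia.
  pose proof (IH j). pose proof (IH (S j)). pose proof (pow_succ_bernoulli M j).
  change (fact (S j)) with (S j * fact j)%nat in *. change (S M ^ S j)%nat with (S M * S M ^ j)%nat in *.
  change (M ^ S j)%nat with (M * M ^ j)%nat in *. simpl fact. nia.
Qed.

Lemma binom_small n k : (n < k)%nat -> binom n k = 0%nat.
Proof. revert k; induction n; intros [|k] H; simpl; try lia. rewrite !IHn by lia. auto. Qed.

Lemma binom_diag n : binom n n = 1%nat.
Proof. induction n; simpl; auto. rewrite IHn, binom_small by lia. auto. Qed.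

Lemma binom_le_pow_sub n k : (binom n k <= n ^ (n - k))%nat.
Proof.
  revert k; induction n as [|n IH]; intros [|k]; simpl; try lia.
  - pose proof (Nat.pow_le_mono_l 1 (S n) (S n)). rewrite Nat.pow_1_l in H. simpl in H. lia.
  - destruct (Nat.lt_trichotomy n k) as [Hl|[He|Hg]].
    + rewrite !binom_small by lia. lia.
    + subst. rewrite binom_diag, binom_small by lia. rewrite Nat.sub_diag. simpl. lia.
    + pose proof (IH k) as H1. pose proof (IH (S k)) as H2.
      replace (n - k)%nat with (S (n - S k)) in * by lia.
      pose proof (pow_succ_bernoulli n (n - S k)).
      assert (1 <= S (n - S k))%nat by lia. nia.
Qed.

Lemma INR_binom_le_pow_div_fact M j : INR (binom M j) <= INR M ^ j / INR (fact j).
Proof.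
  pose proof (binom_mul_fact_le M j) as H. apply le_INR in H. rewrite mult_INR, pow_INR in H.
  pose proof (INR_fact_lt_0 j). apply Rmult_le_reg_r with (INR (fact j)); auto.
  unfold Rdiv. rewrite Rmult_assoc, Rinv_l by lra. lra.
Qed.

Lemma INR_binom_le_pow n k : INR (binom n k) <= INR n ^ k.
Proof.
  eapply Rle_trans; [apply INR_binom_le_pow_div_fact|].
  assert (1 <= INR (fact k)) by (apply (le_INR 1), lt_O_fact).
  assert (0 <= INR n ^ k) by (apply pow_le, pos_INR).
  apply Rmult_le_reg_r with (INR (fact k)); [lra|]. unfold Rdiv. rewrite Rmult_assoc, Rinv_l by lra. nra.
Qed.

Lemma INR_binom_le_pow_sub n k : INR (binom n k) <= INR n ^ (n - k).
Proof. rewrite <- pow_INR. apply le_INR, binom_le_pow_sub. Qed.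

Lemma binom_pow_le M Mb p j : 0 <= p -> INR M <= Mb ->
  INR (binom M j) * p ^ j <= (Mb * p) ^ j / INR (fact j).
Proof.
  intros Hp HM. pose proof (INR_fact_lt_0 j).
  assert (INR M ^ j <= Mb ^ j) by (apply pow_incr; split; auto; apply pos_INR).
  assert (0 <= p ^ j) by (apply pow_le; auto).
  eapply Rle_trans. { apply Rmult_le_compat_r; auto. apply INR_binom_le_pow_div_fact. }
  rewrite Rpow_mult_distr. unfold Rdiv. rewrite Rmult_comm, <- Rmult_assoc, (Rmult_comm (p ^ j)).
  apply Rmult_le_compat_r; [left; apply Rinv_0_lt_compat; auto|]. nra.
Qed.

(** * Sums, indicators and the product Bernoulli measure *)

Definition lsum {X} (g : X -> R) (L : list X) : R := fold_right (fun x acc => g x + acc) 0 L.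

Lemma lsum_le {X} (g h : X -> R) L : (forall x, In x L -> g x <= h x) -> lsum g L <= lsum h L.
Proof.
  induction L as [|a L IH]; simpl; intros H; [lra|].
  pose proof (H a (or_introl eq_refl)). assert (lsum g L <= lsum h L) by (apply IH; auto). lra.
Qed.

Lemma lsum_ext {X} (g h : X -> R) L : (forall x, g x = h x) -> lsum g L = lsum h L.
Proof. intros H; induction L; simpl; auto. rewrite H, IHL; auto. Qed.

Lemma lsum_nonneg {X} (g : X -> R) L : (forall x, In x L -> 0 <= g x) -> 0 <= lsum g L.
Proof.
  induction L as [|a L IH]; simpl; intros H; [lra|].
  pose proof (H a (or_introl eq_refl)). assert (0 <= lsum g L) by (apply IH; auto). lra.
Qed.

Lemma lsum_const {X} (c : R) (L : list X) : lsum (fun _ => c) L = INR (length L) * c.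
Proof. induction L; simpl length; simpl lsum; [simpl; lra|]. rewrite IHL, S_INR. lra. Qed.

Lemma lsum_scal {X} (c : R) (g : X -> R) L : lsum (fun x => c * g x) L = c * lsum g L.
Proof. induction L; simpl; [lra|]. rewrite IHL. lra. Qed.

Lemma lsum_app {X} (g : X -> R) l1 l2 : lsum g (l1 ++ l2) = lsum g l1 + lsum g l2.
Proof. induction l1; simpl; [lra|]. rewrite IHl1; lra. Qed.

Lemma lsum_map {X Y} (g : Y -> R) (h : X -> Y) L : lsum g (map h L) = lsum (fun x => g (h x)) L.
Proof. induction L; simpl; auto. rewrite IHL. auto. Qed.

Lemma lsum_flat_map {X Y} (g : Y -> R) (h : X -> list Y) L :
  lsum g (flat_map h L) = lsum (fun x => lsum g (h x)) L.
Proof. induction L; simpl; auto. rewrite lsum_app, IHL. auto. Qed.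

Lemma lsum_seq_sum_f_R0 g m : lsum g (seq 0 (S m)) = sum_f_R0 g m.
Proof. induction m; [simpl; lra|]. rewrite seq_S, lsum_app, IHm. simpl. lra. Qed.

Lemma indic_true (P : Prop) : P -> indic P = 1.
Proof. intros H. unfold indic. destruct (excluded_middle_informative P); tauto. Qed.

Lemma indic_false (P : Prop) : ~ P -> indic P = 0.
Proof. intros H. unfold indic. destruct (excluded_middle_informative P); tauto. Qed.

Lemma indic_ext (P Q : Prop) : (P <-> Q) -> indic P = indic Q.
Proof.
  intros H. unfold indic.
  destruct (excluded_middle_informative P), (excluded_middle_informative Q); tauto.
Qed.

Lemma indic_bounds (P : Prop) : 0 <= indic P <= 1.
Proof. unfold indic. destruct (excluded_middle_informative P); lra. Qed.

Lemma indic_and (P Q : Prop) : indic (P /\ Q) = indic P * indic Q.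
Proof.
  unfold indic. destruct (excluded_middle_informative P), (excluded_middle_informative Q),
    (excluded_middle_informative (P /\ Q)); try tauto; lra.
Qed.

Lemma indic_not (P : Prop) : indic (~ P) = 1 - indic P.
Proof.
  unfold indic. destruct (excluded_middle_informative P), (excluded_middle_informative (~P)); try tauto; lra.
Qed.

Lemma indic_le (P Q : Prop) : (P -> Q) -> indic P <= indic Q.
Proof.
  intros H. unfold indic.
  destruct (excluded_middle_informative P), (excluded_middle_informative Q); try tauto; lra.
Qed.

Lemma indic_exists_le_lsum {X} (P : X -> Prop) L :
  indic (exists x, In x L /\ P x) <= lsum (fun x => indic (P x)) L.
Proof.
  induction L as [|a L IH]; simpl.
  - rewrite indic_false; [lra|]. intros [x [[] _]].
  - pose proof (indic_bounds (P a)).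
    pose proof (lsum_nonneg (fun x => indic (P x)) L (fun x _ => proj1 (indic_bounds (P x)))).
    unfold indic at 1. destruct (excluded_middle_informative _) as [[x [[<-|Hx] Px]]|Hn].
    + rewrite indic_true; auto; lra.
    + assert (indic (exists x, In x L /\ P x) = 1) by (apply indic_true; eauto). lra.
    + lra.
Qed.

Lemma expect_ext p m f g : (forall l, length l = m -> f l = g l) -> expect p m f = expect p m g.
Proof.
  revert f g; induction m; intros f g H; simpl; [apply H; auto|].
  rewrite (IHm (fun l => f (true :: l)) (fun l => g (true :: l))),
          (IHm (fun l => f (false :: l)) (fun l => g (false :: l))); auto;
  intros; apply H; simpl; auto.
Qed.

Lemma expect_le p m f g : 0 <= p <= 1 -> (forall l, length l = m -> f l <= g l) ->
  expect p m f <= expect p m g.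
Proof.
  intros Hp; revert f g; induction m; intros f g H; simpl; [apply H; auto|].
  assert (expect p m (fun l => f (true :: l)) <= expect p m (fun l => g (true :: l)))
    by (apply IHm; intros; apply H; simpl; auto).
  assert (expect p m (fun l => f (false :: l)) <= expect p m (fun l => g (false :: l)))
    by (apply IHm; intros; apply H; simpl; auto).
  nra.
Qed.

Lemma expect_const p m c : expect p m (fun _ => c) = c.
Proof. induction m; simpl; auto. rewrite IHm. ring. Qed.

Lemma expect_plus p m f g : expect p m (fun l => f l + g l) = expect p m f + expect p m g.
Proof. revert f g; induction m; intros; simpl; auto. rewrite !IHm. ring. Qed.

Lemma expect_scal p m c f : expect p m (fun l => c * f l) = c * expect p m f.
Proof. revert f; induction m; intros; simpl; auto. rewrite !IHm. ring. Qed.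

Lemma expect_lsum {X} p m (g : X -> list bool -> R) L :
  expect p m (fun l => lsum (fun x => g x l) L) = lsum (fun x => expect p m (g x)) L.
Proof. induction L; simpl; [apply expect_const|]. rewrite expect_plus, IHL. auto. Qed.

Lemma expect_nonneg p m f : 0 <= p <= 1 -> (forall l, length l = m -> 0 <= f l) -> 0 <= expect p m f.
Proof. intros. rewrite <- (expect_const p m 0). apply expect_le; auto. Qed.

(* A constraint [c] prescribes the value of some bits ([None] leaves bit i free). *)
Definition bit_weight (p : R) (o : option bool) : R :=
  match o with None => 1 | Some true => p | Some false => 1 - p end.

Fixpoint constraint_weight (p : R) (m : nat) (c : nat -> option bool) : R :=
  match m with O => 1 | S m' => bit_weight p (c O) * constraint_weight p m' (fun i => c (S i)) end.

Definition satisfies (m : nat) (c : nat -> option bool) (l : list bool) : Prop :=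
  forall i v, (i < m)%nat -> c i = Some v -> nth_error l i = Some v.

Lemma satisfies_cons m c x l :
  satisfies (S m) c (x :: l) <-> (forall v, c O = Some v -> x = v) /\ satisfies m (fun i => c (S i)) l.
Proof.
  split.
  - intros H. split.
    + intros v Hv. specialize (H O v ltac:(lia) Hv). simpl in H. congruence.
    + intros i v Hi Hv. apply (H (S i) v); auto; lia.
  - intros [H1 H2] [|i] v Hi Hv; simpl; [f_equal; apply H1; auto|apply H2; auto; lia].
Qed.

Lemma expect_satisfies p m c : expect p m (fun l => indic (satisfies m c l)) = constraint_weight p m c.
Proof.
  revert c; induction m; intros c; simpl.
  - apply indic_true. intros i v H; lia.
  - rewrite <- IHm.
    assert (Hb : forall x, expect p m (fun l => indic (satisfies (S m) c (x :: l)))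
               = indic (forall v, c O = Some v -> x = v) * expect p m (fun l => indic (satisfies m (fun i => c (S i)) l))).
    { intros x. rewrite <- expect_scal. apply expect_ext. intros l _. rewrite <- indic_and. apply indic_ext, satisfies_cons. }
    rewrite !Hb.
    destruct (c O) as [[|]|]; simpl;
      [rewrite (indic_true (forall v, _ -> true = v)), (indic_false (forall v, _ -> false = v))
      |rewrite (indic_false (forall v, _ -> true = v)), (indic_true (forall v, _ -> false = v))
      |rewrite !indic_true];
      try ring; try (intros v Hv; inversion Hv; auto); try (intros H; discriminate (H _ eq_refl)).
Qed.

Lemma constraint_weight_ext p m c c' : (forall i, c i = c' i) -> constraint_weight p m c = constraint_weight p m c'.
Proof. revert c c'; induction m; intros; simpl; auto. rewrite H. f_equal. apply IHm. auto. Qed.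

Lemma constraint_weight_free p m : constraint_weight p m (fun _ => None) = 1.
Proof. induction m; simpl; auto. rewrite IHm; simpl; ring. Qed.

Lemma constraint_weight_set p m c q v : (q < m)%nat -> c q = None ->
  constraint_weight p m (fun i => if Nat.eqb i q then Some v else c i) = bit_weight p (Some v) * constraint_weight p m c.
Proof.
  revert c q; induction m; intros c q Hq Hc; simpl; [lia|].
  destruct q as [|q]; simpl.
  - rewrite Hc. simpl. ring.
  - rewrite (IHm (fun i => c (S i)) q) by (auto; lia). simpl. ring.
Qed.

Lemma constraint_weight_set_list p m c v F : NoDup F -> (forall q, In q F -> (q < m)%nat /\ c q = None) ->
  constraint_weight p m (fun i => if in_dec Nat.eq_dec i F then Some v else c i)
  = bit_weight p (Some v) ^ length F * constraint_weight p m c.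
Proof.
  induction F as [|x F IH]; intros HF HFc.
  - simpl. rewrite Rmult_1_l. apply constraint_weight_ext. intros i. reflexivity.
  - inversion HF as [|x' F' Hx HF']; subst.
    destruct (HFc x (or_introl eq_refl)) as [Hxm Hxc].
    rewrite (constraint_weight_ext p m _
      (fun i => if Nat.eqb i x then Some v else if in_dec Nat.eq_dec i F then Some v else c i)).
    + rewrite constraint_weight_set, IH; auto; [simpl; ring| |].
      * intros q Hq; apply HFc; right; auto.
      * destruct (in_dec _ _ _); tauto.
    + intros i. destruct (Nat.eqb_spec i x) as [->|Hne].
      * destruct (in_dec Nat.eq_dec x (x :: F)) as [_|H]; [reflexivity|exfalso; apply H; left; auto].
      * destruct (in_dec Nat.eq_dec i (x :: F)) as [[E|Hi]|Hi]; [congruence| |];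
          destruct (in_dec Nat.eq_dec i F); simpl in *; tauto.
Qed.

Lemma prob_bits_fixed p m F S : NoDup F -> NoDup S -> (forall q, In q F -> In q S -> False) ->
  (forall q, In q F \/ In q S -> q < m)%nat ->
  expect p m (fun l => indic ((forall q, In q F -> nth_error l q = Some false) /\
                              (forall q, In q S -> nth_error l q = Some true)))
  = (1 - p) ^ length F * p ^ length S.
Proof.
  intros HF HS HD Hm.
  set (cS := fun i => if in_dec Nat.eq_dec i S then Some true else None).
  set (cFS := fun i => if in_dec Nat.eq_dec i F then Some false else cS i).
  transitivity (constraint_weight p m cFS).
  - rewrite <- expect_satisfies. apply expect_ext. intros l _. apply indic_ext.
    unfold satisfies, cFS, cS. split.
    + intros [H1 H2] i v Hi. destruct (in_dec _ i F); [intros E; inversion E; subst; auto|].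
      destruct (in_dec _ i S); [intros E; inversion E; subst; auto|discriminate].
    + intros H. split; intros q Hq; apply H; auto; destruct (in_dec _ q F); try tauto.
      * exfalso; eauto.
      * destruct (in_dec _ q S); tauto.
  - unfold cFS. rewrite constraint_weight_set_list; auto.
    + unfold cS. rewrite constraint_weight_set_list, constraint_weight_free; auto.
      simpl. ring.
    + intros q Hq. split; auto. unfold cS. destruct (in_dec _ q S); auto. exfalso; eauto.
Qed.

Definition bit (b : list bool) (q : nat) : bool := nth q b false.

Lemma prob_zeros_and_ones_le p m F I j : 0 <= p <= 1 -> NoDup F -> NoDup I ->
  (forall q, In q F -> In q I -> False) -> (forall q, In q F \/ In q I -> q < m)%nat ->
  expect p m (fun b => indic ((forall q, In q F -> nth_error b q = Some false) /\ (j <= countb (bit b) I)%nat))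
  <= INR (binom (length I) j) * ((1 - p) ^ length F * p ^ j).
Proof.
  intros Hp HF HI HD Hm.
  set (Ev := fun b s => (forall q, In q F -> nth_error b q = Some false) /\ (forall q, In q s -> nth_error b q = Some true)).
  eapply Rle_trans.
  { apply expect_le with (g := fun b => lsum (fun s => indic (Ev b s)) (subsets I j)); auto.
    intros b Hb. eapply Rle_trans; [|apply (indic_exists_le_lsum (Ev b))].
    apply indic_le. intros [H1 H2]. destruct (subsets_of_countb (bit b) I j H2) as [s [Hs Hs']].
    exists s. split; auto. split; auto.
    intros q Hq. destruct (in_subsets I j s Hs) as [Hi _]. specialize (Hs' q Hq). unfold bit in Hs'.
    assert (q < length b)%nat by (rewrite Hb; apply Hm; right; auto).
    rewrite (nth_error_nth' b false H). congruence. }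
  rewrite expect_lsum, <- length_subsets, <- lsum_const. apply lsum_le. intros s Hs.
  destruct (in_subsets I j s Hs) as [Hi [Hl Hn]]. unfold Ev.
  rewrite prob_bits_fixed, Hl; auto; [lra| |].
  - intros q H1 H2. apply (HD q); auto.
  - intros q [H|H]; apply Hm; auto.
Qed.

Lemma pow_one_minus_le_exp p N : 0 <= p <= 1 -> (1 - p) ^ N <= exp (- p * INR N).
Proof.
  intros Hp. induction N; [simpl; rewrite Rmult_0_r, exp_0; lra|].
  rewrite S_INR. replace (- p * (INR N + 1)) with (- p + (- p * INR N)) by ring. rewrite exp_plus. simpl.
  apply Rmult_le_compat; try lra; [apply pow_le; lra|]. pose proof (exp_ineq1_le (- p)). lra.
Qed.

Section RandomHypergraph.

Variables (n : nat) (p2 p3 : R).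
Hypotheses (Hp2 : 0 <= p2 <= 1) (Hp3 : 0 <= p3 <= 1).

Lemma prob_G_nonneg E : 0 <= prob_G n p2 p3 E.
Proof.
  unfold prob_G. apply expect_nonneg; auto. intros. apply expect_nonneg; auto. intros; apply indic_bounds.
Qed.

Lemma prob_G_not E : prob_G n p2 p3 (fun b2 b3 => ~ E b2 b3) = 1 - prob_G n p2 p3 E.
Proof.
  unfold prob_G.
  rewrite (expect_ext p2 _ _ (fun b2 => 1 + (-1) * expect p3 (length (triples n)) (fun b3 => indic (E b2 b3)))).
  { rewrite expect_plus, expect_const, expect_scal. ring. }
  intros b2 _. rewrite (expect_ext p3 _ _ (fun b3 => 1 + (-1) * indic (E b2 b3))).
  - rewrite expect_plus, expect_const, expect_scal. ring.
  - intros; rewrite indic_not; ring.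
Qed.

Lemma prob_G_le_lsum_prod E {X} (L : list X) g h :
  (forall b2 b3, length b2 = length (pairs n) -> length b3 = length (triples n) ->
     indic (E b2 b3) <= lsum (fun x => g x b2 * h x b3) L) ->
  prob_G n p2 p3 E <= lsum (fun x => expect p2 (length (pairs n)) (g x) * expect p3 (length (triples n)) (h x)) L.
Proof.
  intros H. unfold prob_G.
  eapply Rle_trans. { apply expect_le; auto. intros b2 Hb2. apply expect_le; auto. intros b3 Hb3. apply H; auto. }
  rewrite (expect_ext p2 _ _ (fun b2 => lsum (fun x => g x b2 * expect p3 (length (triples n)) (h x)) L)).
  - rewrite expect_lsum. right. apply lsum_ext. intros x.
    rewrite (expect_ext p2 _ _ (fun b2 => expect p3 (length (triples n)) (h x) * g x b2)) by (intros; lra).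
    rewrite expect_scal. lra.
  - intros b2 _. rewrite expect_lsum. apply lsum_ext. intros x. apply expect_scal.
Qed.

Lemma prob_G_le_lsum E {X} (L : list X) (c : X -> R) (Ex : X -> list bool -> list bool -> Prop) :
  (forall b2 b3, length b2 = length (pairs n) -> length b3 = length (triples n) ->
     indic (E b2 b3) <= lsum (fun x => c x * indic (Ex x b2 b3)) L) ->
  prob_G n p2 p3 E <= lsum (fun x => c x * prob_G n p2 p3 (Ex x)) L.
Proof.
  intros H. unfold prob_G.
  eapply Rle_trans. { apply expect_le; auto. intros b2 Hb2. apply expect_le; auto. intros b3 Hb3. apply H; auto. }
  rewrite (expect_ext p2 _ _ (fun b2 => lsum (fun x => c x * expect p3 (length (triples n)) (fun b3 => indic (Ex x b2 b3))) L)).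
  - rewrite expect_lsum. right. apply lsum_ext. intros x. apply expect_scal.
  - intros b2 _. rewrite expect_lsum. apply lsum_ext. intros x. apply expect_scal.
Qed.

End RandomHypergraph.

(** * The explored set of a propagation run *)

Lemma edge3_perm n b3 x y z x' y' z' :
  Permutation [x; y; z] [x'; y'; z'] -> edge3 n b3 x y z -> edge3 n b3 x' y' z'.
Proof.
  intros HP [k [i [j [l [H1 [H2 H3]]]]]]. exists k, i, j, l. repeat split; auto.
  eapply Permutation_trans; [apply Permutation_sym, HP|auto].
Qed.

(* Each newly discovered vertex u comes with its own witnessing edge: a 2-edge {w,u} or a
   3-edge {w,u,x}; distinct u give distinct edges since u is the only unexplored vertex on it. *)
Lemma witness_edges n b2 b3 (Yt Dt : nat -> Prop) w (N : list nat) :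
  NoDup N -> (forall u, In u N -> newly n b2 b3 Yt Dt w u) -> ~ In w N ->
  exists E2n E3n, NoDup E2n /\ NoDup E3n /\ (length E2n + length E3n = length N)%nat /\
   (forall q, In q E2n -> nth_error b2 q = Some true /\ exists i j u, nth_error (pairs n) q = Some (i, j) /\
       In u N /\ ((w = i /\ u = j) \/ (w = j /\ u = i))) /\
   (forall q, In q E3n -> nth_error b3 q = Some true /\ exists i j l u x, nth_error (triples n) q = Some (i, j, l) /\
       In u N /\ Dt x /\ Permutation [w; u; x] [i; j; l]).
Proof.
  induction N as [|u N IH]; intros HN HNW HwN.
  { exists [], []. split; [constructor|]. split; [constructor|]. split; [reflexivity|]. split; intros q []. }
  inversion HN as [|u' N' Hu HN']; subst.
  destruct IH as [E2n [E3n [H1 [H2 [H3 [H4 H5]]]]]]; auto.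
  { intros; apply HNW; right; auto. }
  { intros Hw; apply HwN; right; auto. }
  assert (Huw : u <> w) by (intros ->; apply HwN; left; auto).
  destruct (HNW u (or_introl eq_refl)) as [Hun [HnY [HnD [He2|[x [Hx He3]]]]]].
  - destruct He2 as [q [i [j [Hq1 [Hq2 Hq3]]]]].
    exists (q :: E2n), E3n. split; [|split; [auto|split; [simpl; lia|split]]].
    + constructor; auto. intros Hin. apply H4 in Hin as [_ [i' [j' [u0 [E [Hu0 Hw0]]]]]].
      rewrite Hq1 in E. inversion E; subst i' j'.
      assert (u0 <> w) by (intros ->; apply HwN; right; auto).
      assert (u0 <> u) by (intros ->; tauto). lia.
    + intros q' [<-|Hq'].
      * split; auto. exists i, j, u. split; auto. split; [left|]; auto.
      * destruct (H4 q' Hq') as [? [i' [j' [u0 [? [? ?]]]]]]. split; auto.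
        exists i', j', u0. split; auto. split; [right|]; auto.
    + intros q' Hq'. destruct (H5 q' Hq') as [? [i' [j' [l' [u0 [x0 [? [? ?]]]]]]]]. split; auto.
      exists i', j', l', u0, x0. split; auto. split; [right|]; tauto.
  - destruct He3 as [q [i [j [l [Hq1 [Hq2 Hq3]]]]]].
    exists E2n, (q :: E3n). split; [auto|split; [|split; [simpl; lia|split]]].
    + constructor; auto. intros Hin. apply H5 in Hin as [_ [i' [j' [l' [u0 [x0 [E [Hu0 [Hx0 HP]]]]]]]]].
      rewrite Hq1 in E. inversion E; subst i' j' l'.
      assert (HP2 : Permutation [w; u; x] [w; u0; x0])
        by (eapply Permutation_trans; [apply Hq3|apply Permutation_sym, HP]).
      apply Permutation_cons_inv in HP2.
      assert (Hin : In u [u0; x0]) by (eapply Permutation_in; [apply HP2|left; auto]).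
      destruct Hin as [->|[->|[]]]; tauto.
    + intros q' Hq'. destruct (H4 q' Hq') as [? [i' [j' [u0 [? [? ?]]]]]]. split; auto.
      exists i', j', u0. split; auto. split; [right|]; auto.
    + intros q' [<-|Hq'].
      * split; auto. exists i, j, l, u, x. split; auto. split; [left|]; auto.
      * destruct (H5 q' Hq') as [? [i' [j' [l' [u0 [x0 [? [? ?]]]]]]]]. split; auto.
        exists i', j', l', u0, x0. split; auto. split; [right|]; tauto.
Qed.

(* After t steps: [seen] lists the active and inactive vertices, [done] the inactive ones, and
   [E2], [E3] are the indices of the edges through which the vertices of [seen] other than
   the root were discovered. *)
Record explored (n : nat) (b2 b3 : list bool) (Yt Dt : nat -> Prop) (t : nat)
    (seen done E2 E3 : list nat) : Prop := {
  ex_done : forall u, Dt u <-> In u done;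
  ex_active : forall u, Yt u <-> In u seen /\ ~ In u done;
  ex_done_seen : incl done seen;
  ex_seen_NoDup : NoDup seen;
  ex_done_NoDup : NoDup done;
  ex_time : length done = t;
  ex_seen_lt : forall u, In u seen -> (u < n)%nat;
  ex_edges2_NoDup : NoDup E2;
  ex_edges3_NoDup : NoDup E3;
  ex_edges_count : (length E2 + length E3 + 1 = length seen)%nat;
  ex_edges2 : forall q, In q E2 -> nth_error b2 q = Some true /\
    exists i j, nth_error (pairs n) q = Some (i, j) /\ In i seen /\ In j seen;
  ex_edges3 : forall q, In q E3 -> nth_error b3 q = Some true /\
    exists i j l, nth_error (triples n) q = Some (i, j, l) /\ In i seen /\ In j seen /\ In l seen;
  ex_closed2 : forall w u, In w done -> (u < n)%nat -> edge2 n b2 w u -> In u seen;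
  ex_closed3 : forall a b u, In a done -> In b done -> a <> b -> (u < n)%nat -> edge3 n b3 a b u -> In u seen
}.

Section Step.

Variables (n : nat) (b2 b3 : list bool) (Yt Dt : nat -> Prop) (t : nat) (seen done E2 E3 : list nat) (w : nat).
Hypotheses (Hex : explored n b2 b3 Yt Dt t seen done E2 E3) (Hw : Yt w).

Let N := filter (fun u => if excluded_middle_informative (newly n b2 b3 Yt Dt w u) then true else false) (seq 0 n).

Lemma in_newly_list u : In u N <-> newly n b2 b3 Yt Dt w u.
Proof.
  unfold N. rewrite filter_In, in_seq.
  destruct (excluded_middle_informative (newly n b2 b3 Yt Dt w u)) as [h|h]; split; try tauto.
  - intros; split; auto. destruct h; lia.
  - intros [_ ?]; discriminate.
Qed.

Lemma active_seen : In w seen /\ ~ In w done.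
Proof. destruct Hex as [_ eA _ _ _ _ _ _ _ _ _ _ _ _]. apply eA, Hw. Qed.

Lemma newly_not_seen u : In u N -> ~ In u seen.
Proof.
  destruct Hex as [eD eA _ _ _ _ _ _ _ _ _ _ _ _].
  intros Hu HuS. apply in_newly_list in Hu as [_ [HnY [HnD _]]].
  destruct (in_dec Nat.eq_dec u done); [apply HnD, eD|apply HnY, eA]; auto.
Qed.

Lemma step_closed2 w' u : In w' (done ++ [w]) -> (u < n)%nat -> edge2 n b2 w' u -> In u (seen ++ N).
Proof.
  destruct Hex as [eD eA eDS _ _ _ _ _ _ _ _ _ c2 _]. rewrite !in_app_iff. intros [Hw'|[<-|[]]] Hu He; [left; eauto|].
  destruct (in_dec Nat.eq_dec u seen) as [HuS|HuS]; [left; auto|right].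
  apply in_newly_list. repeat split; auto.
  - rewrite eA; tauto.
  - rewrite eD. intros Hd; apply HuS, eDS, Hd.
Qed.

Lemma step_closed3 a b u : In a (done ++ [w]) -> In b (done ++ [w]) -> a <> b -> (u < n)%nat ->
  edge3 n b3 a b u -> In u (seen ++ N).
Proof.
  destruct Hex as [eD eA eDS _ _ _ _ _ _ _ _ _ _ c3]. rewrite !in_app_iff. intros Ha Hb Hab Hu He. simpl in Ha, Hb.
  destruct (in_dec Nat.eq_dec u seen) as [HuS|HuS]; [left; auto|right].
  assert (HNu : forall x, In x done -> edge3 n b3 w u x -> In u N).
  { intros x Hx Hex'. apply in_newly_list. repeat split; auto.
    - rewrite eA; tauto.
    - rewrite eD. intros Hd; apply HuS, eDS, Hd.
    - right. exists x. split; auto. apply eD; auto. }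
  destruct Ha as [Ha|[Ha|[]]], Hb as [Hb|[Hb|[]]].
  - exfalso; apply HuS; eauto.
  - subst b. apply (HNu a Ha). eapply edge3_perm; [|apply He].
    apply perm_trans with [w; a; u]; [apply perm_swap|apply perm_skip, perm_swap].
  - subst a. apply (HNu b Hb). eapply edge3_perm; [|apply He]. apply perm_skip, perm_swap.
  - subst; tauto.
Qed.

Lemma step_edges : exists E2n E3n,
  NoDup (E2 ++ E2n) /\ NoDup (E3 ++ E3n) /\ (length E2n + length E3n = length N)%nat /\
  (forall q, In q (E2 ++ E2n) -> nth_error b2 q = Some true /\
     exists i j, nth_error (pairs n) q = Some (i, j) /\ In i (seen ++ N) /\ In j (seen ++ N)) /\
  (forall q, In q (E3 ++ E3n) -> nth_error b3 q = Some true /\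
     exists i j l, nth_error (triples n) q = Some (i, j, l) /\
       In i (seen ++ N) /\ In j (seen ++ N) /\ In l (seen ++ N)).
Proof.
  pose proof active_seen as [HwS HwD]. pose proof newly_not_seen as HNS.
  destruct (witness_edges n b2 b3 Yt Dt w N) as [E2n [E3n [H1 [H2 [H3 [H4 H5]]]]]].
  { apply NoDup_filter, seq_NoDup. }
  { intros u Hu; apply in_newly_list; auto. }
  { intros HwN. apply (HNS w); auto. }
  destruct Hex as [eD eA eDS eSN eDN eT eL e2N e3N eC e2 e3 c2 c3].
  exists E2n, E3n. split; [|split; [|split; [auto|split]]].
  - apply NoDup_app; auto. intros q A B. destruct (e2 q A) as [_ [i [j [E [Ei Ej]]]]].
    destruct (H4 q B) as [_ [i' [j' [u [E' [Hu Hw']]]]]]. rewrite E in E'. inversion E'; subst.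
    apply (HNS u Hu). destruct Hw' as [[_ ->]|[_ ->]]; auto.
  - apply NoDup_app; auto. intros q A B. destruct (e3 q A) as [_ [i [j [l [E [Ei [Ej El]]]]]]].
    destruct (H5 q B) as [_ [i' [j' [l' [u [x [E' [Hu [Hx HP]]]]]]]]]. rewrite E in E'. inversion E'; subst.
    apply (HNS u Hu). assert (In u [i'; j'; l']) by (eapply Permutation_in; [apply HP|right; left; auto]).
    destruct H as [<-|[<-|[<-|[]]]]; auto.
  - intros q. rewrite in_app_iff. intros [A|A].
    + destruct (e2 q A) as [? [i [j [? [? ?]]]]]. split; auto. exists i, j. rewrite !in_app_iff. auto.
    + destruct (H4 q A) as [? [i [j [u [? [Hu Hw']]]]]]. split; auto. exists i, j. rewrite !in_app_iff.
      split; auto. destruct Hw' as [[<- <-]|[<- <-]]; tauto.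
  - intros q. rewrite in_app_iff. intros [A|A].
    + destruct (e3 q A) as [? [i [j [l [? [? [? ?]]]]]]]. split; auto. exists i, j, l. rewrite !in_app_iff. auto.
    + destruct (H5 q A) as [? [i [j [l [u [x [? [Hu [Hx HP]]]]]]]]]. split; auto. exists i, j, l.
      assert (HxS : In x seen) by (apply eDS, eD; auto).
      assert (Hall : forall y, In y [i; j; l] -> In y (seen ++ N)).
      { intros y Hy. apply (Permutation_in y (Permutation_sym HP)) in Hy. rewrite in_app_iff.
        destruct Hy as [<-|[<-|[<-|[]]]]; tauto. }
      split; auto. split; [apply Hall; simpl; auto|]. split; apply Hall; simpl; auto.
Qed.

End Step.

Lemma explored_step n b2 b3 Yt Dt Yt' Dt' t seen done E2 E3 w :
  explored n b2 b3 Yt Dt t seen done E2 E3 -> Yt w ->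
  (forall u, Yt' u <-> ((Yt u \/ newly n b2 b3 Yt Dt w u) /\ u <> w)) ->
  (forall u, Dt' u <-> (Dt u \/ u = w)) ->
  exists seen' done' E2' E3', explored n b2 b3 Yt' Dt' (S t) seen' done' E2' E3'.
Proof.
  intros Hex Hw HY' HD'.
  set (N := filter (fun u => if excluded_middle_informative (newly n b2 b3 Yt Dt w u) then true else false) (seq 0 n)).
  pose proof (in_newly_list n b2 b3 Yt Dt w) as HN.
  pose proof (active_seen n b2 b3 Yt Dt t seen done E2 E3 w Hex Hw) as [HwS HwD].
  pose proof (newly_not_seen n b2 b3 Yt Dt t seen done E2 E3 w Hex) as HNS. fold N in HN, HNS.
  pose proof (step_closed2 n b2 b3 Yt Dt t seen done E2 E3 w Hex) as C2.
  pose proof (step_closed3 n b2 b3 Yt Dt t seen done E2 E3 w Hex Hw) as C3.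
  destruct (step_edges n b2 b3 Yt Dt t seen done E2 E3 w Hex Hw) as [E2n [E3n [H1 [H2 [H3 [H4 H5]]]]]].
  fold N in H3, H4, H5.
  exists (seen ++ N), (done ++ [w]), (E2 ++ E2n), (E3 ++ E3n).
  destruct Hex as [eD eA eDS eSN eDN eT eL e2N e3N eC e2 e3 c2 c3]. constructor; auto.
  - intros u. rewrite HD', eD, in_app_iff. simpl. intuition.
  - intros u. rewrite HY', eA, !in_app_iff, HN. simpl. split.
    + intros [[[A1 A2]|A] B].
      * split; [left; auto|]. intros [C|[C|[]]]; auto.
      * assert (HuN : In u N) by (apply HN; auto).
        split; [right; auto|]. intros [C|[C|[]]]; [apply (HNS u); auto|auto].
    + intros [[A|A] B]; split; intuition.
  - intros u. rewrite !in_app_iff. intros [A|[<-|[]]]; left; auto.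
  - apply NoDup_app; auto; [apply NoDup_filter, seq_NoDup|]. intros a Ha Hb. apply (HNS a); auto.
  - apply NoDup_app; auto; [repeat constructor; auto|]. intros a Ha [<-|[]]. tauto.
  - rewrite length_app; simpl. lia.
  - intros u. rewrite in_app_iff. intros [A|A]; auto. apply HN in A as [? _]; auto.
  - rewrite !length_app. lia.
Qed.

Lemma run_explored n b2 b3 v Y D T : propagation_run n b2 b3 v Y D T ->
  forall t, (t <= T)%nat -> exists seen done E2 E3, explored n b2 b3 (Y t) (D t) t seen done E2 E3.
Proof.
  intros [Hv [HY0 [HD0 [Hst HYT]]]]. induction t as [|t IH]; intros Ht.
  - exists [v], [], [], []. constructor; simpl; try tauto; try (repeat constructor; simpl; tauto).
    + intros u; split; [apply HD0|intros []].
    + intros u. rewrite HY0. split; [intros ->; auto|intros [[->|[]] _]; auto].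
    + intros u [<-|[]]; auto.
  - destruct IH as [seen [done [E2 [E3 Hex]]]]; [lia|].
    destruct (Hst t ltac:(lia)) as [w [Hw [HY' HD']]].
    eapply explored_step; eauto.
Qed.

(* At the stopping time no vertex is active, so [seen = done]. *)
Lemma run_component n b2 b3 v Y D T : propagation_run n b2 b3 v Y D T ->
  exists W E2 E3, NoDup W /\ length W = T /\ (forall u, In u W -> (u < n)%nat) /\
   NoDup E2 /\ NoDup E3 /\ (length E2 + length E3 + 1 = T)%nat /\
   (forall q, In q E2 -> nth_error b2 q = Some true /\
      exists i j, nth_error (pairs n) q = Some (i, j) /\ In i W /\ In j W) /\
   (forall q, In q E3 -> nth_error b3 q = Some true /\
      exists i j l, nth_error (triples n) q = Some (i, j, l) /\ In i W /\ In j W /\ In l W) /\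
   (forall w u, In w W -> (u < n)%nat -> edge2 n b2 w u -> In u W) /\
   (forall a b u, In a W -> In b W -> a <> b -> (u < n)%nat -> edge3 n b3 a b u -> In u W).
Proof.
  intros Hr. destruct (run_explored n b2 b3 v Y D T Hr T (le_n T)) as [seen [done [E2 [E3 Hex]]]].
  destruct Hr as [_ [_ [_ [_ HYT]]]].
  destruct Hex as [eD eA eDS eSN eDN eT eL e2N e3N eC e2 e3 c2 c3].
  assert (HSW : forall u, In u seen -> In u done).
  { intros u Hu. destruct (in_dec Nat.eq_dec u done); auto. exfalso; apply (HYT u), eA; auto. }
  assert (HL : length seen = length done) by (apply Nat.le_antisymm; apply NoDup_incl_length; auto).
  exists done, E2, E3.
  refine (conj eDN (conj eT (conj _ (conj e2N (conj e3N (conj _ (conj _ (conj _ (conj _ _))))))))).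
  - intros u Hu; apply eL, eDS, Hu.
  - lia.
  - intros q Hq. destruct (e2 q Hq) as [? [i [j [? [? ?]]]]]. split; auto. exists i, j. auto.
  - intros q Hq. destruct (e3 q Hq) as [? [i [j [l [? [? [? ?]]]]]]]. split; auto. exists i, j, l. auto.
  - intros w u Hw Hu He; apply HSW; eauto.
  - intros a b u Ha Hb Hab Hu He; apply HSW; eauto.
Qed.

(** * Reduction to closed vertex sets *)

Definition closed_event (n : nat) (b2 b3 : list bool) (k : nat) (f : nat -> bool) : Prop :=
  (forall q, In q (positions (pair_crosses f) (pairs n)) -> nth_error b2 q = Some false) /\
  (forall q, In q (positions (triple_two_inside f) (triples n)) -> nth_error b3 q = Some false) /\
  (k - 1 <= countb (bit b2) (positions (pair_inside f) (pairs n))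
          + countb (bit b3) (positions (triple_inside f) (triples n)))%nat.

Lemma nth_error_bool (b : list bool) q : (q < length b)%nat ->
  nth_error b q = Some true \/ nth_error b q = Some false.
Proof. intros H. destruct (nth_error b q) as [[|]|] eqn:E; auto. apply nth_error_None in E. lia. Qed.

Section ClosedComponent.

Variables (n : nat) (b2 b3 : list bool) (W E2 E3 : list nat) (f : nat -> bool).
Hypotheses (Hl2 : length b2 = length (pairs n)) (Hl3 : length b3 = length (triples n))
  (Hf : forall x, f x = true <-> In x W).
Hypotheses (HE2 : NoDup E2) (HE3 : NoDup E3)
  (HE2p : forall q, In q E2 -> nth_error b2 q = Some true /\
      exists i j, nth_error (pairs n) q = Some (i, j) /\ In i W /\ In j W)
  (HE3p : forall q, In q E3 -> nth_error b3 q = Some true /\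
      exists i j l, nth_error (triples n) q = Some (i, j, l) /\ In i W /\ In j W /\ In l W)
  (HC2 : forall w u, In w W -> (u < n)%nat -> edge2 n b2 w u -> In u W)
  (HC3 : forall a b u, In a W -> In b W -> a <> b -> (u < n)%nat -> edge3 n b3 a b u -> In u W).

Let Hf' x : f x = false <-> ~ In x W.
Proof. rewrite <- Hf. destruct (f x); split; congruence. Qed.

Lemma crossing_pairs_absent q : In q (positions (pair_crosses f) (pairs n)) -> nth_error b2 q = Some false.
Proof.
  intros Hq. apply in_positions in Hq as [[i j] [Eq Hx]].
  assert (Hij : (i < j < n)%nat) by (apply nth_error_In, in_pairs in Eq; auto).
  assert (Hq : (q < length b2)%nat) by (rewrite Hl2; apply nth_error_Some; congruence).
  destruct (nth_error_bool b2 q Hq) as [Hb|Hb]; auto. exfalso.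
  unfold pair_crosses in Hx; simpl in Hx.
  destruct (f i) eqn:Fi, (f j) eqn:Fj; simpl in Hx; try discriminate.
  - apply Hf in Fi. apply Hf' in Fj. apply Fj, (HC2 i j); [auto|lia|]. exists q, i, j. auto.
  - apply Hf' in Fi. apply Hf in Fj. apply Fi, (HC2 j i); [auto|lia|]. exists q, i, j. auto.
Qed.

Lemma two_inside_triples_absent q :
  In q (positions (triple_two_inside f) (triples n)) -> nth_error b3 q = Some false.
Proof.
  intros Hq. apply in_positions in Hq as [[[i j] l] [Eq Hx]].
  assert (Hij : (i < j < l /\ l < n)%nat) by (apply nth_error_In, in_triples in Eq; auto).
  assert (Hq : (q < length b3)%nat) by (rewrite Hl3; apply nth_error_Some; congruence).
  destruct (nth_error_bool b3 q Hq) as [Hb|Hb]; auto. exfalso.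
  unfold triple_two_inside in Hx.
  destruct (f i) eqn:Fi, (f j) eqn:Fj, (f l) eqn:Fl; simpl in Hx; try discriminate.
  - apply Hf in Fi. apply Hf in Fj. apply Hf' in Fl. apply Fl, (HC3 i j l); auto; [lia|lia|]. exists q, i, j, l. auto.
  - apply Hf in Fi. apply Hf' in Fj. apply Hf in Fl. apply Fj, (HC3 i l j); auto; [lia|lia|]. exists q, i, j, l. repeat split; auto. apply perm_skip, perm_swap.
  - apply Hf' in Fi. apply Hf in Fj. apply Hf in Fl. apply Fi, (HC3 j l i); auto; [lia|lia|]. exists q, i, j, l. repeat split; auto.
    apply perm_trans with [j; i; l]; [apply perm_skip, perm_swap|apply perm_swap].
Qed.

Lemma inside_edges_count :
  (length E2 + length E3 <= countb (bit b2) (positions (pair_inside f) (pairs n))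
                           + countb (bit b3) (positions (triple_inside f) (triples n)))%nat.
Proof.
  apply Nat.add_le_mono; apply countb_lower; auto.
  - intros q Hq. destruct (HE2p q Hq) as [Hb [i [j [Eq [Hi Hj]]]]]. split.
    + apply in_positions. exists (i, j). split; auto. unfold pair_inside; simpl.
      apply Hf in Hi. apply Hf in Hj. rewrite Hi, Hj; auto.
    + unfold bit. apply nth_error_nth with (d := false) in Hb. auto.
  - intros q Hq. destruct (HE3p q Hq) as [Hb [i [j [l [Eq [Hi [Hj Hk]]]]]]]. split.
    + apply in_positions. exists (i, j, l). split; auto. unfold triple_inside.
      apply Hf in Hi. apply Hf in Hj. apply Hf in Hk. rewrite Hi, Hj, Hk; auto.
    + unfold bit. apply nth_error_nth with (d := false) in Hb. auto.
Qed.

End ClosedComponent.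

Lemma sorted_subset W n : NoDup W -> (forall u, In u W -> (u < n)%nat) ->
  let C := filter (memb W) (seq 0 n) in
  In C (subsets (seq 0 n) (length W)) /\ forall x, memb C x = true <-> In x W.
Proof.
  intros HW HWn C.
  assert (HC : forall x, memb C x = true <-> In x W).
  { intros x. rewrite memb_true. unfold C. rewrite filter_In, in_seq, memb_true.
    split; [tauto|]. intros Hx. specialize (HWn x Hx). split; [lia|auto]. }
  split; auto.
  replace (length W) with (length C); [apply filter_in_subsets|].
  apply Nat.le_antisymm; apply NoDup_incl_length.
  - apply NoDup_filter, seq_NoDup.
  - intros x Hx. apply HC, memb_true, Hx.
  - auto.
  - intros x Hx. apply memb_true, HC, Hx.
Qed.

Lemma large_component_closed_event n b2 b3 (K : R) :
  length b2 = length (pairs n) -> length b3 = length (triples n) ->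
  (exists v Y D T, propagation_run n b2 b3 v Y D T /\ K <= INR T /\ (T <= n - 1)%nat) ->
  exists k, In k (seq 0 n) /\ K <= INR k /\
    exists C, In C (subsets (seq 0 n) k) /\ closed_event n b2 b3 k (memb C).
Proof.
  intros Hl2 Hl3 [v [Y [D [T [Hr [HK HT]]]]]].
  assert (Hvn : (v < n)%nat) by (destruct Hr; auto).
  destruct (run_component n b2 b3 v Y D T Hr)
    as [W [E2 [E3 [HW [HWl [HWn [HE2 [HE3 [HEl [HE2p [HE3p [HC2 HC3]]]]]]]]]]]].
  destruct (sorted_subset W n HW HWn) as [HCs HCW].
  exists T. split; [apply in_seq; lia|]. split; auto.
  exists (filter (memb W) (seq 0 n)). rewrite <- HWl. split; auto. split; [|split].
  - eapply crossing_pairs_absent; eauto.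
  - eapply two_inside_triples_absent; eauto.
  - pose proof (inside_edges_count n b2 b3 W E2 E3 _ HCW HE2 HE3 HE2p HE3p). lia.
Qed.

(** * Probability that a fixed set is closed *)

Lemma closed_set_sizes n k C : In C (subsets (seq 0 n) k) ->
  (k <= n)%nat /\
  INR (length (positions (pair_crosses (memb C)) (pairs n))) = INR k * (INR n - INR k) /\
  INR (length (positions (triple_two_inside (memb C)) (triples n))) = INR k * (INR k - 1) * (INR n - INR k) / 2 /\
  INR (length (positions (pair_inside (memb C)) (pairs n))) <= INR k ^ 2 / 2 /\
  INR (length (positions (triple_inside (memb C)) (triples n))) <= INR k ^ 3 / 6.
Proof.
  intros HC. pose proof (countb_subsets (seq 0 n) k C (seq_NoDup _ _) HC) as Hc.
  pose proof (countb_predC (memb C) (seq 0 n)) as Hd. rewrite length_seq in Hd.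
  destruct (pair_counts (memb C) n) as [H1 H2]. destruct (triple_counts (memb C) n) as [H3 H4].
  cbv zeta in H1, H2, H3, H4. rewrite Hc in *. rewrite !length_positions.
  assert (Hdn : countb (fun x => negb (memb C x)) (seq 0 n) = (n - k)%nat) by lia.
  rewrite Hdn in *. split; [lia|].
  assert (Hk : INR (n - k) = INR n - INR k) by (rewrite minus_INR; auto; lia).
  assert (E2 : INR 2 = 2) by (simpl; lra). assert (E3 : INR 3 = 3) by (simpl; lra).
  assert (E6 : INR 6 = 6) by (simpl; lra). pose proof (pos_INR k).
  split; [rewrite H1, mult_INR, Hk; auto|].
  split; [apply (f_equal INR) in H3; rewrite !plus_INR, !mult_INR, Hk, E2 in H3; lra|].
  split; [apply (f_equal INR) in H2; rewrite !plus_INR, !mult_INR, E2 in H2; simpl; lra|].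
  apply (f_equal INR) in H4. rewrite !plus_INR, !mult_INR, E6, E3, E2 in H4. simpl.
  assert (INR k = 0 \/ 1 <= INR k) as [H0|H0].
  { destruct k; [left; auto|right; rewrite S_INR; pose proof (pos_INR k); lra]. }
  - rewrite H0 in *. nra.
  - assert (INR k * INR k >= INR k) by nra. assert (INR k * INR k * INR k >= INR k * INR k) by nra. lra.
Qed.

Lemma prob_zeros_and_ones_le_exp p m F I j Mb : 0 <= p <= 1 -> NoDup F -> NoDup I ->
  (forall q, In q F -> In q I -> False) -> (forall q, In q F \/ In q I -> q < m)%nat -> INR (length I) <= Mb ->
  expect p m (fun b => indic ((forall q, In q F -> nth_error b q = Some false) /\ (j <= countb (bit b) I)%nat))
  <= (Mb * p) ^ j / INR (fact j) * exp (- p * INR (length F)).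
Proof.
  intros Hp HF HI HD Hm HMb.
  eapply Rle_trans; [apply prob_zeros_and_ones_le; auto|].
  replace (INR (binom (length I) j) * ((1 - p) ^ length F * p ^ j))
    with ((1 - p) ^ length F * (INR (binom (length I) j) * p ^ j)) by ring.
  rewrite (Rmult_comm ((Mb * p) ^ j / _)).
  apply Rmult_le_compat; [apply pow_le; lra| |apply pow_one_minus_le_exp; auto|].
  - apply Rmult_le_pos; [apply pos_INR|apply pow_le; lra].
  - apply binom_pow_le; auto; lra.
Qed.

Lemma lsum_binomial X Y m :
  lsum (fun j => X ^ j / INR (fact j) * (Y ^ (m - j) / INR (fact (m - j)))) (seq 0 (S m))
  = (X + Y) ^ m / INR (fact m).
Proof.
  rewrite lsum_seq_sum_f_R0, binomial. unfold Rdiv at 3. rewrite Rmult_comm, scal_sum.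
  apply sum_eq. intros i Hi. unfold C.
  pose proof (INR_fact_lt_0 i). pose proof (INR_fact_lt_0 (m - i)). pose proof (INR_fact_lt_0 m).
  field. lra.
Qed.

Section FixedSet.

Variables (n k : nat) (C : list nat) (p2 p3 : R).
Hypotheses (Hp2 : 0 <= p2 <= 1) (Hp3 : 0 <= p3 <= 1) (HC : In C (subsets (seq 0 n) k)).

Let F2 := positions (pair_crosses (memb C)) (pairs n).
Let I2 := positions (pair_inside (memb C)) (pairs n).
Let F3 := positions (triple_two_inside (memb C)) (triples n).
Let I3 := positions (triple_inside (memb C)) (triples n).

Let zeros_and_ones (F I : list nat) j (b : list bool) :=
  indic ((forall q, In q F -> nth_error b q = Some false) /\ (j <= countb (bit b) I)%nat).

(* At least k - 1 present inside edges means j of them are 2-edges and k - 1 - j are 3-edges for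
   some j < k (truncating j at k - 1). *)
Lemma prob_closed_event_le_convolution (Hk : (1 <= k)%nat) :
  prob_G n p2 p3 (fun b2 b3 => closed_event n b2 b3 k (memb C)) <=
  lsum (fun j => expect p2 (length (pairs n)) (zeros_and_ones F2 I2 j) *
                 expect p3 (length (triples n)) (zeros_and_ones F3 I3 (k - 1 - j))) (seq 0 k).
Proof.
  apply prob_G_le_lsum_prod; auto. intros b2 b3 _ _.
  set (Ev := fun j => ((forall q, In q F2 -> nth_error b2 q = Some false) /\ (j <= countb (bit b2) I2)%nat) /\
                      ((forall q, In q F3 -> nth_error b3 q = Some false) /\ (k - 1 - j <= countb (bit b3) I3)%nat)).
  rewrite (lsum_ext _ (fun j => indic (Ev j))) by (intros; unfold Ev; symmetry; apply indic_and).
  eapply Rle_trans; [|apply (indic_exists_le_lsum Ev)].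
  apply indic_le. intros [G1 [G2 G3]].
  exists (Nat.min (countb (bit b2) I2) (k - 1)). split; [apply in_seq; lia|].
  unfold Ev. split; split; auto; unfold I2, I3 in *; lia.
Qed.

Lemma prob_closed_event_le (Hk : (1 <= k)%nat) :
  prob_G n p2 p3 (fun b2 b3 => closed_event n b2 b3 k (memb C)) <=
  (INR k ^ 2 / 2 * p2 + INR k ^ 3 / 6 * p3) ^ (k - 1) / INR (fact (k - 1)) *
  (exp (- p2 * (INR k * (INR n - INR k))) * exp (- p3 * (INR k * (INR k - 1) * (INR n - INR k) / 2))).
Proof.
  destruct (closed_set_sizes n k C HC) as [Hkn [S1 [S2 [S3 S4]]]].
  fold F2 F3 I2 I3 in S1, S2, S3, S4.
  set (X := INR k ^ 2 / 2 * p2). set (Y := INR k ^ 3 / 6 * p3).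
  set (Ea := exp (- p2 * (INR k * (INR n - INR k)))).
  set (Eb := exp (- p3 * (INR k * (INR k - 1) * (INR n - INR k) / 2))).
  eapply Rle_trans; [apply prob_closed_event_le_convolution, Hk|].
  eapply Rle_trans.
  { apply lsum_le with (h := fun j => (X ^ j / INR (fact j) * Ea) * (Y ^ (k - 1 - j) / INR (fact (k - 1 - j)) * Eb)).
    intros j Hj. apply Rmult_le_compat; try (apply expect_nonneg; auto; intros; apply indic_bounds).
    - unfold Ea, X, zeros_and_ones. rewrite <- S1.
      apply prob_zeros_and_ones_le_exp; auto; try apply positions_NoDup.
      + apply positions_disjoint. intros [i j'] A1 A2. unfold pair_crosses, pair_inside in *; simpl in *.
        destruct (memb C i), (memb C j'); discriminate.
      + intros q [H|H]; eapply positions_lt; eauto.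
    - unfold Eb, Y, zeros_and_ones. rewrite <- S2.
      apply prob_zeros_and_ones_le_exp; auto; try apply positions_NoDup.
      + apply positions_disjoint. intros [[i j'] l] A1 A2. unfold triple_two_inside, triple_inside in *.
        destruct (memb C i), (memb C j'), (memb C l); discriminate.
      + intros q [H|H]; eapply positions_lt; eauto. }
  destruct k as [|m]; [lia|]. replace (S m - 1)%nat with m by lia.
  right. rewrite <- lsum_binomial, <- (Rmult_comm (Ea * Eb)), <- lsum_scal. apply lsum_ext.
  intros j. replace (S m - 1 - j)%nat with (m - j)%nat by lia. ring.
Qed.

Lemma prob_closed_event_le_exp :
  prob_G n p2 p3 (fun b2 b3 => closed_event n b2 b3 k (memb C)) <=
  exp (- p3 * (INR k * (INR k - 1) * (INR n - INR k) / 2)).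
Proof.
  destruct (closed_set_sizes n k C HC) as [Hkn [S1 [S2 [S3 S4]]]]. fold F3 in S2.
  eapply Rle_trans.
  { apply (prob_G_le_lsum_prod n p2 p3 Hp2 Hp3 _ [tt] (fun _ _ => 1)
      (fun _ b3 => indic (forall q, In q F3 -> nth_error b3 q = Some false))).
    intros b2 b3 _ _. simpl. rewrite Rmult_1_l, Rplus_0_r. apply indic_le. intros [_ [G _]]. auto. }
  simpl. rewrite expect_const, Rmult_1_l, Rplus_0_r, <- S2.
  eapply Rle_trans; [|apply (pow_one_minus_le_exp p3 (length F3)); auto].
  pose proof (prob_bits_fixed p3 (length (triples n)) F3 [] (positions_NoDup _ _) (NoDup_nil _) (fun q _ H => H)) as P.
  simpl in P. rewrite Rmult_1_r in P. rewrite <- P.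
  - right. apply expect_ext. intros l _. apply indic_ext. tauto.
  - intros q [H|[]]; eapply positions_lt; eauto.
Qed.

End FixedSet.

Lemma exp_le_mono x y : x <= y -> exp x <= exp y.
Proof. intros [H|H]; [left; apply exp_increasing; auto|subst; lra]. Qed.

Lemma le_ln_of_exp_le x y : 0 < y -> exp x <= y -> x <= ln y.
Proof.
  intros Hy H. destruct (Rle_or_lt x (ln y)) as [|Hlt]; auto. exfalso.
  apply exp_increasing in Hlt. rewrite exp_ln in Hlt; auto. lra.
Qed.

Lemma exp_pow x k : exp x ^ k = exp (x * INR k).
Proof.
  induction k; [simpl; rewrite Rmult_0_r, exp_0; auto|].
  rewrite S_INR. simpl. rewrite IHk, <- exp_plus. f_equal. ring.
Qed.

Lemma pow_self_le_exp_mul_fact k : INR k ^ k <= exp (INR k) * INR (fact k).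
Proof.
  induction k; [simpl; rewrite exp_0; lra|].
  rewrite S_INR. simpl pow. change (fact (S k)) with (S k * fact k)%nat. rewrite mult_INR, S_INR.
  destruct k.
  - simpl. replace (0 + 1) with 1 by ring. pose proof (exp_ineq1_le 1). lra.
  - set (x := INR (S k)) in *. assert (Hx : 1 <= x) by (unfold x; rewrite S_INR; pose proof (pos_INR k); lra).
    (* (1 + 1/x)^x <= e *)
    assert (H1 : x + 1 <= x * exp (/ x)).
    { pose proof (exp_ineq1_le (/ x)). assert (x * (1 + / x) = x + 1) by (field; lra). nra. }
    assert (H2 : (x + 1) ^ S k <= (x * exp (/ x)) ^ S k) by (apply pow_incr; lra).
    rewrite Rpow_mult_distr, exp_pow in H2. fold x in H2.
    replace (/ x * x) with 1 in H2 by (field; lra).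
    rewrite exp_plus.
    assert (0 < exp 1) by apply exp_pos. assert (0 <= x ^ S k) by (apply pow_le; lra).
    assert (x ^ S k * exp 1 <= exp x * INR (fact (S k)) * exp 1) by (apply Rmult_le_compat_r; lra).
    nra.
Qed.

(* Counting spanning structures: n^k/k! choices of the set and (k^2 z / n)^(k-1)/(k-1)! for
   its k - 1 edges, with k^k/k! <= e^k and z^(k-1) <= e^((z-1)k). *)
Lemma binom_spanning_le n k z : (1 <= k)%nat -> 0 < INR n -> 1 <= z ->
  INR (binom n k) * ((INR k ^ 2 / INR n * z) ^ (k - 1) / INR (fact (k - 1)))
  <= INR n * exp ((z + 1) * INR k).
Proof.
  intros Hk Hn Hz. destruct k as [|m]; [lia|]. replace (S m - 1)%nat with m by lia.
  set (nn := INR n) in *. set (kk := INR (S m)).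
  assert (Hkk : 1 <= kk) by (unfold kk; rewrite S_INR; pose proof (pos_INR m); lra).
  assert (Hfm : INR (fact (S m)) = kk * INR (fact m))
    by (unfold kk; change (fact (S m)) with (S m * fact m)%nat; rewrite mult_INR; auto).
  pose proof (INR_fact_lt_0 m) as Hf0.
  set (u := kk ^ S m / INR (fact (S m))).
  assert (Hu : u <= exp kk).
  { unfold u. pose proof (pow_self_le_exp_mul_fact (S m)) as Hs. fold kk in Hs.
    apply Rmult_le_reg_r with (INR (fact (S m))); [nra|]. unfold Rdiv. rewrite Rmult_assoc, Rinv_l by nra. lra. }
  assert (Hu0 : 0 <= u) by (unfold u; apply Rmult_le_pos; [apply pow_le; lra|left; apply Rinv_0_lt_compat; nra]).
  assert (Hzm : z ^ m <= exp ((z - 1) * kk)).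
  { apply Rle_trans with (z ^ S m); [simpl; assert (0 <= z ^ m) by (apply pow_le; lra); nra|].
    unfold kk. rewrite <- exp_pow. apply pow_incr. pose proof (exp_ineq1_le (z - 1)). lra. }
  assert (Hzm0 : 0 <= z ^ m) by (apply pow_le; lra).
  assert (Iden : nn ^ S m / INR (fact (S m)) * ((kk ^ 2 / nn * z) ^ m / INR (fact m)) = nn * (u * u) / kk * z ^ m).
  { unfold u, Rdiv. rewrite Hfm, !Rpow_mult_distr, <- pow_mult, pow_inv.
    replace (2 * m)%nat with (m + m)%nat by lia. rewrite pow_add, <- (tech_pow_Rmult nn m), <- (tech_pow_Rmult kk m).
    assert (0 < nn ^ m) by (apply pow_lt; lra). field. repeat split; nra. }
  eapply Rle_trans.
  { apply Rmult_le_compat_r; [|apply INR_binom_le_pow_div_fact].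
    apply Rmult_le_pos; [|left; apply Rinv_0_lt_compat; auto]. apply pow_le.
    apply Rmult_le_pos; [|lra]. apply Rmult_le_pos; [apply pow_le; lra|left; apply Rinv_0_lt_compat; lra]. }
  fold nn kk. rewrite Iden.
  assert (Hukk : u * u / kk <= exp kk * exp kk).
  { apply Rle_trans with (u * u); [|apply Rmult_le_compat; auto].
    apply Rmult_le_reg_r with kk; [lra|]. unfold Rdiv. rewrite Rmult_assoc, Rinv_l by lra. nra. }
  replace ((z + 1) * kk) with (kk + kk + (z - 1) * kk) by ring. rewrite !exp_plus.
  replace (nn * (u * u) / kk * z ^ m) with (nn * (u * u / kk) * z ^ m) by (field; lra).
  rewrite Rmult_assoc. apply Rmult_le_compat_l; [lra|].
  apply Rmult_le_compat; auto. unfold Rdiv. apply Rmult_le_pos; [nra|left; apply Rinv_0_lt_compat; lra].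
Qed.

(* With q = r / ln n and d = k / n. *)
Lemma small_regime_exponent_le L kk a q d :
  0 < L -> 1 <= kk -> 0 < a <= 1 -> 0 < q <= 1 -> 0 <= d <= 1/2 -> 18 <= q * kk -> L <= kk -> q * kk * d <= 1 ->
  L + 2 * kk + (a / 2 + q * kk / 6 - 1) * kk - a * kk * (1 - d) - q * kk * (kk - 1) * (1 - d) / 2 <= -2 * L.
Proof.
  intros HL Hk Ha Hq Hd H18 HLk Hqd.
  assert ((q * kk) * kk >= 18 * kk) by nra.
  assert (a * kk * d <= kk / 2) by nra.
  assert ((q * kk * d) * kk <= kk) by nra.
  assert (q * kk <= kk) by nra.
  assert (0 <= q * kk * d) by nra.
  assert (0 <= a * kk) by nra.
  nra.
Qed.

Section Regimes.

Variables (n k : nat) (r : R).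
Hypotheses (Hr : 0 < r) (Hn : 1 < INR n).

Let nn := INR n.
Let L := ln nn.
Let kk := INR k.

Let HL : 0 < L.
Proof. unfold L. rewrite <- ln_1. apply ln_increasing; unfold nn; lra. Qed.

Lemma small_regime_le a : (1 <= k)%nat -> 0 < a <= 1 ->
  18 * L <= r * kk -> L <= kk -> kk <= nn / 2 -> r <= L -> r * kk ^ 2 <= L * nn ->
  INR (binom n k) * ((kk ^ 2 / 2 * (a / nn) + kk ^ 3 / 6 * (r / (nn * L))) ^ (k - 1) / INR (fact (k - 1)) *
    (exp (- (a / nn) * (kk * (nn - kk))) * exp (- (r / (nn * L)) * (kk * (kk - 1) * (nn - kk) / 2))))
  <= exp (-2 * L).
Proof.
  intros Hk1 Ha H18 HLk Hd Hq Hqd.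
  assert (Hkk : 1 <= kk) by (unfold kk; apply (le_INR 1) in Hk1; simpl in Hk1; lra).
  set (z := a / 2 + r / L * kk / 6).
  assert (H18' : 18 <= r / L * kk).
  { apply Rmult_le_reg_r with L; auto. replace (r / L * kk * L) with (r * kk) by (field; lra). lra. }
  assert (E1 : kk ^ 2 / 2 * (a / nn) + kk ^ 3 / 6 * (r / (nn * L)) = kk ^ 2 / nn * z)
    by (unfold z; field; unfold nn in *; lra).
  rewrite E1, <- Rmult_assoc.
  eapply Rle_trans.
  { apply Rmult_le_compat_r; [apply Rmult_le_pos; left; apply exp_pos|].
    apply binom_spanning_le; auto; unfold z, nn in *; lra. }
  fold nn kk. replace nn with (exp L) at 1 by (unfold L; apply exp_ln; unfold nn in *; lra).
  rewrite <- !exp_plus. apply exp_le_mono.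
  assert (Hq1 : 0 < r / L <= 1).
  { split; [apply Rdiv_lt_0_compat; auto|]. apply Rmult_le_reg_r with L; auto.
    unfold Rdiv. rewrite Rmult_assoc, Rinv_l by lra. lra. }
  assert (Hd1 : 0 <= kk / nn <= 1 / 2).
  { split; [apply Rmult_le_pos; [lra|left; apply Rinv_0_lt_compat; unfold nn in *; lra]|].
    apply Rmult_le_reg_r with nn; [unfold nn in *; lra|]. unfold Rdiv. rewrite Rmult_assoc, Rinv_l by (unfold nn in *; lra). lra. }
  assert (Hqd' : r / L * kk * (kk / nn) <= 1).
  { apply Rmult_le_reg_r with (L * nn); [unfold nn in *; nra|].
    replace (r / L * kk * (kk / nn) * (L * nn)) with (r * kk ^ 2) by (field; unfold nn in *; lra). lra. }
  eapply Rle_trans; [|apply (small_regime_exponent_le L kk a (r / L) (kk / nn)); auto].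
  right. unfold z. field. unfold nn in *; lra.
Qed.

Lemma medium_regime_le : (2 <= k)%nat -> kk <= nn / 2 -> 8 * L ^ 2 <= r * (kk - 1) ->
  INR (binom n k) * exp (- (r / (nn * L)) * (kk * (kk - 1) * (nn - kk) / 2)) <= exp (-2 * L).
Proof.
  intros Hk Hd H8.
  assert (Hkk : 2 <= kk) by (unfold kk; apply (le_INR 2) in Hk; simpl in Hk; lra).
  assert (Hnn : 1 < nn) by auto.
  eapply Rle_trans; [apply Rmult_le_compat_r; [left; apply exp_pos|apply INR_binom_le_pow]|].
  fold nn. replace (nn ^ k) with (exp L ^ k) by (unfold L; rewrite exp_ln; auto; lra).
  rewrite exp_pow, <- exp_plus. apply exp_le_mono. fold kk.
  set (t := (nn - kk) / nn).
  assert (Ht : 1 / 2 <= t). { assert (nn * t = nn - kk) by (unfold t; field; lra). nra. }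
  replace (- (r / (nn * L)) * (kk * (kk - 1) * (nn - kk) / 2)) with (- ((r * (kk - 1)) * kk * t / (2 * L)))
    by (unfold t; field; lra).
  assert (A : (r * (kk - 1)) * kk * t >= 8 * L ^ 2 * kk * (1/2)).
  { assert (r * (kk - 1) * kk >= 8 * L ^ 2 * kk) by nra. assert (0 <= 8 * L^2 * kk) by nra. nra. }
  assert (B : (r * (kk - 1)) * kk * t / (2 * L) >= 2 * L * kk).
  { assert (E : (r * (kk - 1)) * kk * t / (2 * L) * (2 * L) = (r * (kk - 1)) * kk * t) by (field; lra).
    set (y := (r * (kk - 1)) * kk * t / (2 * L)) in *. nra. }
  nra.
Qed.

Lemma large_regime_le : (1 <= k)%nat -> (k <= n - 1)%nat -> nn / 2 <= kk -> 24 * L ^ 2 <= r * (nn - 2) ->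
  INR (binom n k) * exp (- (r / (nn * L)) * (kk * (kk - 1) * (nn - kk) / 2)) <= exp (-2 * L).
Proof.
  intros Hk Hkn Hd H24.
  assert (Hj : 1 <= nn - kk) by (unfold nn, kk; rewrite <- minus_INR by lia; apply (le_INR 1); lia).
  assert (Hnn : 1 < nn) by auto.
  eapply Rle_trans; [apply Rmult_le_compat_r; [left; apply exp_pos|apply INR_binom_le_pow_sub]|].
  fold nn. replace (nn ^ (n - k)) with (exp L ^ (n - k)) by (unfold L; rewrite exp_ln; auto; lra).
  rewrite exp_pow, <- exp_plus. apply exp_le_mono. rewrite minus_INR by lia. fold nn kk.
  assert (A : kk * (kk - 1) >= nn * (nn - 2) / 4) by nra.
  set (j := nn - kk) in *. clearbody j.
  replace (- (r / (nn * L)) * (kk * (kk - 1) * j / 2)) with (- (r * (kk * (kk - 1)) * j / (2 * nn * L)))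
    by (field; lra).
  assert (B : r * (kk * (kk - 1)) * j / (2 * nn * L) >= 3 * L * j).
  { assert (E : r * (kk * (kk - 1)) * j / (2 * nn * L) * (2 * nn * L) = r * (kk * (kk - 1)) * j) by (field; lra).
    assert (r * (kk * (kk - 1)) * j >= r * (nn * (nn - 2) / 4) * j).
    { apply Rle_ge, Rmult_le_compat_r; [lra|]. apply Rmult_le_compat_l; lra. }
    assert (r * (nn * (nn - 2) / 4) * j >= 24 * L ^ 2 * nn / 4 * j).
    { apply Rle_ge. replace (r * (nn * (nn - 2) / 4) * j) with ((r * (nn - 2)) * (nn * j / 4)) by field.
      replace (24 * L ^ 2 * nn / 4 * j) with ((24 * L ^ 2) * (nn * j / 4)) by field. apply Rmult_le_compat_r; nra. }
    set (y := r * (kk * (kk - 1)) * j / (2 * nn * L)) in *.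
    apply Rle_ge, Rmult_le_reg_r with (2 * nn * L); [nra|lra]. }
  nra.
Qed.

End Regimes.

Definition large_n_conditions (r nn L : R) : Prop :=
  2 <= L /\ r <= L /\ 1 + 8 * L ^ 2 / r <= nn / 2 /\
  r * (1 + 8 * L ^ 2 / r) ^ 2 <= L * nn /\ 24 * L ^ 2 <= r * (nn - 2).

Lemma large_n_conditions_ge_2 r nn L : 0 < r -> large_n_conditions r nn L -> 2 <= nn.
Proof.
  intros Hr [_ [_ [Hk1 _]]].
  assert (0 <= 8 * L ^ 2 / r) by (apply Rmult_le_pos; [nra|left; apply Rinv_0_lt_compat; lra]). lra.
Qed.

Lemma edge_probabilities_bounds nn L eps r : 0 < eps < 1 -> 0 < r -> 1 <= nn -> r <= L ->
  0 <= (1 - eps) / nn <= 1 /\ 0 <= r / (nn * L) <= 1.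
Proof.
  intros He Hr Hn HrL. split; split.
  - apply Rmult_le_pos; [lra|left; apply Rinv_0_lt_compat; lra].
  - apply Rmult_le_reg_r with nn; [lra|]. unfold Rdiv. rewrite Rmult_assoc, Rinv_l by lra. lra.
  - apply Rmult_le_pos; [lra|left; apply Rinv_0_lt_compat; nra].
  - apply Rmult_le_reg_r with (nn * L); [nra|]. unfold Rdiv. rewrite Rmult_assoc, Rinv_l by nra. nra.
Qed.

(** * The union bound *)

Lemma prob_large_component_le_lsum n p2 p3 (K : R) : 0 <= p2 <= 1 -> 0 <= p3 <= 1 ->
  prob_G n p2 p3 (fun b2 b3 => exists v Y D T,
          propagation_run n b2 b3 v Y D T /\ K <= INR T /\ (T <= n - 1)%nat)
  <= lsum (fun k => indic (K <= INR k) *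
             lsum (fun C => prob_G n p2 p3 (fun b2 b3 => closed_event n b2 b3 k (memb C))) (subsets (seq 0 n) k))
          (seq 0 n).
Proof.
  intros Hp2 Hp3.
  set (LL := flat_map (fun k => map (fun C => (k, C)) (subsets (seq 0 n) k)) (seq 0 n)).
  eapply Rle_trans.
  { apply (prob_G_le_lsum n p2 p3 Hp2 Hp3 _ LL (fun x => indic (K <= INR (fst x)))
             (fun x b2 b3 => closed_event n b2 b3 (fst x) (memb (snd x)))).
    intros b2 b3 Hb2 Hb3.
    rewrite (lsum_ext _ (fun x => indic (K <= INR (fst x) /\ closed_event n b2 b3 (fst x) (memb (snd x)))))
      by (intros; symmetry; apply indic_and).
    eapply Rle_trans; [|apply indic_exists_le_lsum].
    apply indic_le. intros H.
    destruct (large_component_closed_event n b2 b3 K Hb2 Hb3 H) as [k [Hk [HK [C [HC HG]]]]].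
    exists (k, C). split; auto. apply in_flat_map. exists k. split; auto. apply in_map; auto. }
  right. unfold LL. rewrite lsum_flat_map. apply lsum_ext. intros k. rewrite lsum_map, <- lsum_scal. auto.
Qed.

Lemma closed_sets_of_size_le n k eps r : 0 < eps < 1 -> 0 < r -> (k < n)%nat ->
  large_n_conditions r (INR n) (ln (INR n)) -> K0 eps r * ln (INR n) <= INR k ->
  lsum (fun C => prob_G n ((1 - eps) / INR n) (r / (INR n * ln (INR n)))
                   (fun b2 b3 => closed_event n b2 b3 k (memb C))) (subsets (seq 0 n) k)
  <= exp (-2 * ln (INR n)).
Proof.
  intros He Hr Hkn Hcond HK. pose proof (large_n_conditions_ge_2 _ _ _ Hr Hcond) as Hn2.
  destruct Hcond as [HL2 [HrL [Hk1 [Hk1b H24]]]].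
  set (nn := INR n) in *. set (L := ln nn) in *. set (kk := INR k) in *.
  assert (HK1 : 1 <= K0 eps r) by apply Rmax_l.
  assert (HrK : 18 <= r * K0 eps r).
  { pose proof (Rmax_r 1 (2 * (9 + eps) / r)) as HK2. fold (K0 eps r) in HK2.
    apply Rmult_le_compat_l with (r := r) in HK2; [|lra].
    replace (r * (2 * (9 + eps) / r)) with (2 * (9 + eps)) in HK2 by (field; lra). lra. }
  assert (HkL : L <= kk).
  { assert (L <= K0 eps r * L) by (rewrite <- (Rmult_1_l L) at 1; apply Rmult_le_compat_r; lra). lra. }
  assert (Hk2 : (2 <= k)%nat) by (apply INR_le; simpl; unfold kk in HkL; lra).
  assert (H18 : 18 * L <= r * kk).
  { assert (r * K0 eps r * L <= r * kk) by (rewrite Rmult_assoc; apply Rmult_le_compat_l; lra). nra. }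
  destruct (edge_probabilities_bounds nn L eps r) as [Hp2 Hp3]; auto; try lra.
  set (k1 := 1 + 8 * L ^ 2 / r) in *.
  destruct (Rle_or_lt kk k1) as [Hs|Hl].
  - eapply Rle_trans; [apply lsum_le; intros C HC; apply prob_closed_event_le; auto; lia|].
    rewrite lsum_const, length_subsets, length_seq.
    assert (r * kk ^ 2 <= r * k1 ^ 2).
    { apply Rmult_le_compat_l; [lra|]. apply pow_incr. split; [unfold kk; apply pos_INR|lra]. }
    apply small_regime_le; auto; try lia; unfold k1, kk, L, nn in *; lra.
  - eapply Rle_trans; [apply lsum_le; intros C HC; apply prob_closed_event_le_exp; auto|].
    rewrite lsum_const, length_subsets, length_seq.
    destruct (Rle_or_lt kk (nn / 2)) as [Hh|Hh].
    + assert (8 * L ^ 2 <= r * (kk - 1)).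
      { assert (8 * L ^ 2 / r < kk - 1) by (unfold k1 in Hl; lra).
        apply Rmult_lt_compat_l with (r := r) in H; [|lra].
        replace (r * (8 * L ^ 2 / r)) with (8 * L ^ 2) in H by (field; lra). lra. }
      apply medium_regime_le; auto; unfold kk, L, nn in *; lra.
    + apply large_regime_le; auto; try lia; unfold kk, L, nn in *; lra.
Qed.

Lemma prob_large_component_le n eps r : 0 < eps < 1 -> 0 < r ->
  large_n_conditions r (INR n) (ln (INR n)) ->
  prob_G n ((1 - eps) / INR n) (r / (INR n * ln (INR n)))
    (fun b2 b3 => exists v Y D T,
        propagation_run n b2 b3 v Y D T /\ K0 eps r * ln (INR n) <= INR T /\ (T <= n - 1)%nat)
  <= / INR n.
Proof.
  intros He Hr Hcond. pose proof (large_n_conditions_ge_2 _ _ _ Hr Hcond) as Hn.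
  pose proof Hcond as [HL2 [HrL _]].
  set (nn := INR n) in *. set (L := ln nn) in *.
  destruct (edge_probabilities_bounds nn L eps r) as [Hp2 Hp3]; auto; try lra.
  eapply Rle_trans; [apply prob_large_component_le_lsum; auto|].
  eapply Rle_trans.
  { apply lsum_le with (h := fun _ => exp (-2 * L)). intros k Hk. apply in_seq in Hk.
    destruct (classic (K0 eps r * L <= INR k)) as [HK|HK].
    - rewrite indic_true, Rmult_1_l by auto. apply closed_sets_of_size_le; auto; lia.
    - rewrite indic_false, Rmult_0_l by auto. left; apply exp_pos. }
  rewrite lsum_const, length_seq. fold nn.
  replace (-2 * L) with (- L + - L) by ring. rewrite exp_plus, exp_Ropp. unfold L. rewrite exp_ln by lra.
  right. field. lra.
Qed.

Lemma eventually_INR_ge (M : R) : exists N : nat, forall n, (N <= n)%nat -> M <= INR n.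
Proof.
  destruct (INR_unbounded M) as [N HN]. exists N. intros n Hn. apply le_INR in Hn. lra.
Qed.

Lemma eventually_inv_INR_lt e : 0 < e -> exists N : nat, forall n, (N <= n)%nat -> / INR n < e.
Proof.
  intros He. destruct (eventually_INR_ge (2 / e)) as [N HN]. exists N. intros n Hn.
  specialize (HN n Hn). assert (0 < 2 / e) by (apply Rdiv_lt_0_compat; lra).
  rewrite <- (Rinv_inv e). apply Rinv_lt_contravar; [apply Rmult_lt_0_compat; [apply Rinv_0_lt_compat|]; lra|].
  unfold Rdiv in HN. assert (0 < / e) by (apply Rinv_0_lt_compat; lra). lra.
Qed.

Lemma ln_pow4_le_sqrt x : 1 <= x -> ln x ^ 4 <= 4096 * sqrt x.
Proof.
  intros Hx.
  set (s := sqrt (sqrt (sqrt x))).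
  assert (Hs0 : 0 < s) by (unfold s; do 3 apply sqrt_lt_R0; lra).
  assert (E4 : s ^ 4 = sqrt x).
  { unfold s. replace 4%nat with (2 * 2)%nat by lia. rewrite pow_mult. simpl.
    rewrite !Rmult_1_r, !sqrt_sqrt; auto; apply sqrt_pos. }
  assert (E8 : s ^ 8 = x).
  { replace 8%nat with (4 * 2)%nat by lia. rewrite pow_mult, E4. simpl. rewrite Rmult_1_r, sqrt_sqrt; lra. }
  assert (HL : ln x = 8 * ln s) by (rewrite <- E8, ln_pow; auto; simpl; lra).
  assert (Hls : ln s <= s) by (pose proof (exp_ineq1_le (ln s)); rewrite exp_ln in H; auto; lra).
  assert (HL0 : 0 <= ln x).
  { destruct (Req_dec x 1) as [->|Hne]; [rewrite ln_1; lra|]. left. rewrite <- ln_1. apply ln_increasing; lra. }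
  rewrite <- E4. replace (4096 * s ^ 4) with ((8 * s) ^ 4) by ring.
  apply pow_incr. lra.
Qed.

Lemma large_n_conditions_of_pow4 nn L r : 0 < r -> 2 <= L -> r <= L ->
  (2 * (1 + 8 / r) + r * (1 + 8 / r) ^ 2 + 2 + 24 / r + 1) * L ^ 4 <= nn ->
  large_n_conditions r nn L.
Proof.
  intros Hr HL HrL HB.
  set (c1 := 1 + 8 / r) in *. set (M := L ^ 2) in *.
  assert (HM : 4 <= M) by (unfold M; nra).
  replace (L ^ 4) with (M * M) in HB by (unfold M; ring).
  assert (Hs : 0 < 8 / r) by (apply Rdiv_lt_0_compat; lra).
  assert (Hs2 : 0 < 24 / r) by (apply Rdiv_lt_0_compat; lra).
  assert (Hk1 : 1 + 8 * M / r <= c1 * M).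
  { unfold c1. replace (8 * M / r) with (8 / r * M) by (field; lra). nra. }
  assert (Hk1p : 0 <= 1 + 8 * M / r).
  { replace (8 * M / r) with (8 / r * M) by (field; lra). nra. }
  assert (Hc1 : 1 <= c1) by (unfold c1; lra).
  assert (Hc1M : c1 * M <= c1 * (M * M)) by nra.
  assert (Hrc : 0 <= r * c1 ^ 2 * (M * M)).
  { apply Rmult_le_pos; [apply Rmult_le_pos; [lra|apply pow_le; lra]|nra]. }
  assert (Hsq : r * (1 + 8 * M / r) ^ 2 <= r * c1 ^ 2 * (M * M)).
  { replace (r * c1 ^ 2 * (M * M)) with (r * (c1 * M) ^ 2) by ring.
    apply Rmult_le_compat_l; [lra|]. apply pow_incr; lra. }
  assert (H24 : 24 / r * M <= 24 / r * (M * M)) by (apply Rmult_le_compat_l; nra).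
  assert (H24' : 24 * M = r * (24 / r * M)) by (field; lra).
  assert (HMM : 0 <= M * M) by nra.
  assert (H24p : 0 <= 24 / r * (M * M)) by nra.
  replace ((2 * c1 + r * c1 ^ 2 + 2 + 24 / r + 1) * (M * M))
    with (2 * (c1 * (M * M)) + r * c1 ^ 2 * (M * M) + 2 * (M * M) + 24 / r * (M * M) + M * M) in HB by ring.
  unfold large_n_conditions. fold M. repeat split; auto.
  - lra.
  - assert (nn <= L * nn) by nra. lra.
  - rewrite H24'. apply Rmult_le_compat_l; lra.
Qed.

Lemma large_n_conditions_eventually r : 0 < r ->
  exists N, forall n, (N <= n)%nat -> large_n_conditions r (INR n) (ln (INR n)).
Proof.
  intros Hr.
  set (B := 2 * (1 + 8 / r) + r * (1 + 8 / r) ^ 2 + 2 + 24 / r + 1).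
  assert (HB : 0 < B).
  { assert (0 < 8 / r) by (apply Rdiv_lt_0_compat; lra). assert (0 < 24 / r) by (apply Rdiv_lt_0_compat; lra).
    assert (0 <= r * (1 + 8 / r) ^ 2) by (apply Rmult_le_pos; [lra|apply pow_le; lra]). unfold B; lra. }
  destruct (eventually_INR_ge (Rmax (exp (Rmax 2 r)) ((4096 * B) ^ 2))) as [N HN].
  exists N. intros n Hn. specialize (HN n Hn).
  set (nn := INR n) in *. set (L := ln nn).
  assert (H1 : exp (Rmax 2 r) <= nn) by (eapply Rle_trans; [apply Rmax_l|apply HN]).
  assert (H2 : (4096 * B) ^ 2 <= nn) by (eapply Rle_trans; [apply Rmax_r|apply HN]).
  pose proof (exp_pos (Rmax 2 r)).
  assert (HLm : Rmax 2 r <= L) by (apply le_ln_of_exp_le; auto; lra).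
  assert (HL2 : 2 <= L) by (eapply Rle_trans; [apply Rmax_l|apply HLm]).
  assert (HLr : r <= L) by (eapply Rle_trans; [apply Rmax_r|apply HLm]).
  assert (Hn1 : 1 <= nn) by (pose proof (exp_ineq1_le (Rmax 2 r)); pose proof (Rmax_l 2 r); lra).
  assert (Hsq : 4096 * B <= sqrt nn).
  { rewrite <- (sqrt_pow2 (4096 * B)) by lra. apply sqrt_le_1; auto; [apply pow_le|]; lra. }
  apply large_n_conditions_of_pow4; auto.
  pose proof (ln_pow4_le_sqrt nn Hn1) as Hb. fold L in Hb. fold B.
  assert (B * L ^ 4 <= B * (4096 * sqrt nn)) by (apply Rmult_le_compat_l; lra).
  assert (0 <= sqrt nn) by apply sqrt_pos.
  assert (Hss : B * (4096 * sqrt nn) <= sqrt nn * sqrt nn) by nra.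
  rewrite sqrt_sqrt in Hss by lra. lra.
Qed.

Theorem lemma3 (eps r : R) (Heps0 : 0 < eps) (Heps1 : eps < 1) (Hr : 0 < r) :
  Un_cv (fun n : nat =>
    prob_G n ((1 - eps) / INR n) (r / (INR n * ln (INR n)))
      (fun b2 b3 => ~ exists (v : nat) (Y D : nat -> nat -> Prop) (T : nat),
          propagation_run n b2 b3 v Y D T /\
          K0 eps r * ln (INR n) <= INR T /\ (T <= n - 1)%nat))
    1.
Proof.
  intros e He.
  destruct (large_n_conditions_eventually r Hr) as [N1 HN1].
  destruct (eventually_inv_INR_lt e He) as [N2 HN2].
  exists (Nat.max N1 N2). intros n HnN.
  assert (Hcond := HN1 n ltac:(lia)). assert (Hinv := HN2 n ltac:(lia)).
  pose proof (large_n_conditions_ge_2 _ _ _ Hr Hcond). pose proof Hcond as [_ [HrL _]].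
  destruct (edge_probabilities_bounds (INR n) (ln (INR n)) eps r) as [Hp2 Hp3]; try lra.
  unfold R_dist. rewrite prob_G_not.
  pose proof (prob_G_nonneg n _ _ Hp2 Hp3 (fun b2 b3 => exists v Y D T,
    propagation_run n b2 b3 v Y D T /\ K0 eps r * ln (INR n) <= INR T /\ (T <= n - 1)%nat)).
  pose proof (prob_large_component_le n eps r (conj Heps0 Heps1) Hr Hcond).
  rewrite Rabs_left1 by lra. lra.
Qed.
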